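(* Let $-\infty<a<b<\infty$, let $f:[a,b]\times\mathbb{R}\times\mathbb{R}\to\mathbb{R}$, $(x,u,p)\mapsto f(x,u,p)$, be of class $C^3$, and let $\Phi(u)=\int_a^b f(x,u(x),u'(x))\,dx$ on $C^1([a,b])$. Let $u^0\in C^1([a,b])$ be an extremal (i.e. $\frac{d}{dx}f^0_p=f^0_u$ on $[a,b]$) satisfying $f^0_p(a)=f^0_p(b)=0$, and assume there is $c^0>0$ with $f^0_{pp}(x)\ge c^0$ for all $x\in[a,b]$. Let $h$ be a nontrivial solution of the Jacobi equation $\mathcal{A}h=0$ on $[a,b]$ with $\mathcal{B}h(a)=0$. (i) If $h(y)=0$ for some $y\in(a,b]$, or if $\mathcal{B}h(b)\,h(b)<0$, then $u^0$ is not a weak minimizer of $\Phi$ in $C^1([a,b])$. (ii) If $h(y)\neq0$ for all $y\in(a,b]$ and $\mathcal{B}h(b)\,h(b)>0$, then $u^0$ is a strict weak minimizer of $\Phi$ in $C^1([a,b])$.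
   Context: For a partial derivative $\mathfrak{f}$ of $f$ (e.g. $f_p,f_u,f_{pp},f_{pu},f_{up},f_{uu}$) write $\mathfrak{f}^0(x)=\mathfrak{f}(x,u^0(x),(u^0)'(x))$. For $h\in C^2([a,b])$ define $\mathcal{B}h=f^0_{pp}h'+f^0_{pu}h$, $\mathcal{C}h=f^0_{up}h'+f^0_{uu}h$ and $\mathcal{A}h=-\frac{d}{dx}(\mathcal{B}h)+\mathcal{C}h$; the Jacobi equation is $\mathcal{A}h=0$. No endpoint constraints are imposed. $u^0$ is a weak minimizer in $C^1([a,b])$ if there is $\varepsilon>0$ with $\Phi(v)\ge\Phi(u^0)$ for all $v\in C^1([a,b])$ with $\|v-u^0\|_{C^1}<\varepsilon$ (where $\|v\|_{C^1}=\max|v|+\max|v'|$); strict if $\Phi(v)>\Phi(u^0)$ for such $v\ne u^0$. *)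

From Stdlib Require Import Reals.
From Coquelicot Require Import Coquelicot.
Open Scope R_scope.

Definition cont3 (g : R -> R -> R -> R) : Prop :=
  forall x u p eps, 0 < eps -> exists delta, 0 < delta /\
    forall x' u' p', Rabs (x' - x) < delta -> Rabs (u' - u) < delta ->
      Rabs (p' - p) < delta -> Rabs (g x' u' p' - g x u p) < eps.

Definition Dx (g : R -> R -> R -> R) : R -> R -> R -> R :=
  fun x u p => Derive (fun t => g t u p) x.
Definition Du (g : R -> R -> R -> R) : R -> R -> R -> R :=
  fun x u p => Derive (fun t => g x t p) u.
Definition Dp (g : R -> R -> R -> R) : R -> R -> R -> R :=
  fun x u p => Derive (fun t => g x u t) p.

Fixpoint Ck3 (k : nat) (g : R -> R -> R -> R) : Prop :=
  match k with
  | O => cont3 g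
  | S k' => cont3 g /\
      (forall x u p, ex_derive (fun t => g t u p) x /\
                     ex_derive (fun t => g x t p) u /\
                     ex_derive (fun t => g x u t) p) /\
      Ck3 k' (Dx g) /\ Ck3 k' (Du g) /\ Ck3 k' (Dp g)
  end.


Definition deriv_within (a b : R) (g : R -> R) (x l : R) : Prop :=
  forall eps, 0 < eps -> exists delta, 0 < delta /\
    forall y, a <= y <= b -> Rabs (y - x) < delta ->
      Rabs (g y - g x - l * (y - x)) <= eps * Rabs (y - x).

Definition cont_on (a b : R) (g : R -> R) : Prop :=
  forall x, a <= x <= b -> forall eps, 0 < eps -> exists delta, 0 < delta /\
    forall y, a <= y <= b -> Rabs (y - x) < delta -> Rabs (g y - g x) < eps.

Definition C1_on (a b : R) (v dv : R -> R) : Prop :=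
  (forall x, a <= x <= b -> deriv_within a b v x (dv x)) /\ cont_on a b dv.

Definition C2_on (a b : R) (h dh ddh : R -> R) : Prop :=
  C1_on a b h dh /\ C1_on a b dh ddh.

(* ||v - w||_{C^1} < eps, i.e. max|v-w| + max|v'-w'| < eps on [a,b]
   (maxima exist by continuity; stated via bounds M1 >= max|v-w|, M2 >= max|v'-w'|) *)
Definition C1_dist_lt (a b : R) (v dv w dw : R -> R) (eps : R) : Prop :=
  exists M1 M2, M1 + M2 < eps /\
    forall x, a <= x <= b -> Rabs (v x - w x) <= M1 /\ Rabs (dv x - dw x) <= M2.

Definition Phi (a b : R) (f : R -> R -> R -> R) (v dv : R -> R) : R :=
  RInt (fun x => f x (v x) (dv x)) a b.

Definition weak_minimizer (a b : R) (f : R -> R -> R -> R) (u0 du0 : R -> R) : Prop :=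
  exists eps, 0 < eps /\
    forall v dv, C1_on a b v dv -> C1_dist_lt a b v dv u0 du0 eps ->
      Phi a b f u0 du0 <= Phi a b f v dv.

Definition strict_weak_minimizer (a b : R) (f : R -> R -> R -> R) (u0 du0 : R -> R) : Prop :=
  exists eps, 0 < eps /\
    forall v dv, C1_on a b v dv -> C1_dist_lt a b v dv u0 du0 eps ->
      (exists x, a <= x <= b /\ v x <> u0 x) ->
      Phi a b f u0 du0 < Phi a b f v dv.

(* partial derivative g evaluated along u0: g^0(x) = g(x, u0(x), u0'(x)) *)
Definition along (g : R -> R -> R -> R) (u0 du0 : R -> R) : R -> R :=
  fun x => g x (u0 x) (du0 x).

(* f_p, f_u, f_pp, f_pu (= d/du f_p), f_up (= d/dp f_u), f_uu *)
Definition fp f := Dp f.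
Definition fu f := Du f.
Definition fpp f := Dp (Dp f).
Definition fpu f := Du (Dp f).
Definition fup f := Dp (Du f).
Definition fuu f := Du (Du f).

Definition Bop f (u0 du0 h dh : R -> R) : R -> R :=
  fun x => along (fpp f) u0 du0 x * dh x + along (fpu f) u0 du0 x * h x.
Definition Cop f (u0 du0 h dh : R -> R) : R -> R :=
  fun x => along (fup f) u0 du0 x * dh x + along (fuu f) u0 du0 x * h x.

Definition jacobi_sol (a b : R) f (u0 du0 h dh : R -> R) : Prop :=
  forall x, a <= x <= b ->
    exists l, deriv_within a b (Bop f u0 du0 h dh) x l /\
              - l + Cop f u0 du0 h dh x = 0.

(* The second variation [Q] of [Phi] at the extremal [u0] (whose natural
   boundary conditions kill the first variation) governs everything: since f
   is C^3, [Phi (u0 + e) - Phi u0 = Q e / 2 + o(|e|_{H^1}^2)] uniformly for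
   [e] small in C^1.

   (i) At a weak minimizer [Q >= 0]. Integrating by parts against the Jacobi
   equation gives [Q h = h(b) B h (b)], which rules out [B h (b) h(b) < 0].
   If [h(y) = 0] with [a < y <= b], uniqueness for the Jacobi equation gives
   [B h (y) <> 0]; the test field equal to [h + s] left of [y - dl], to [s]
   right of [y], with [s = - tau B h (y)], then has [Q < 0] for small [dl].

   (ii) If [h] never vanishes (at [a] by uniqueness, as [B h (a) = 0]),
   Picone's identity writes [Q e] as [RInt f_pp (h (e / h)')^2] plus
   [(B h (b) / h(b)) e(b)^2]. Both terms are nonnegative and together they
   control [|e|_{H^1}^2] and [sup e^2], so [Q] is coercive and the expansion
   yields a strict weak minimum. *)

From Stdlib Require Import Reals Lra IndefiniteDescription.
From Coquelicot Require Import Coquelicot.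
Open Scope R_scope.

(** * Continuity on a closed interval *)

Definition clamp (c d x : R) : R := Rmax c (Rmin d x).

Lemma clamp_in c d x : c <= d -> c <= clamp c d x <= d.
Proof. intros H; unfold clamp, Rmax, Rmin; repeat destruct Rle_dec; lra. Qed.

Lemma clamp_id c d x : c <= x <= d -> clamp c d x = x.
Proof. intros H; unfold clamp, Rmax, Rmin; repeat destruct Rle_dec; lra. Qed.

Lemma clamp_lipschitz c d x y : c <= d ->
  Rabs (clamp c d x - clamp c d y) <= Rabs (x - y).
Proof.
  intros H; unfold clamp, Rmax, Rmin; repeat destruct Rle_dec;
  unfold Rabs; repeat destruct Rcase_abs; lra.
Qed.

Lemma clamp_dist_le c d x y : c <= d -> clamp c d x <> clamp c d y ->
  Rabs (x - clamp c d x) <= Rabs (x - y).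
Proof.
  intros H; unfold clamp, Rmax, Rmin; repeat destruct Rle_dec;
  unfold Rabs; repeat destruct Rcase_abs; intros; lra.
Qed.

Lemma continuous_epsP (g : R -> R) x :
  continuous g x <-> forall eps, 0 < eps -> exists delta, 0 < delta /\
    forall y, Rabs (y - x) < delta -> Rabs (g y - g x) < eps.
Proof.
  split.
  - intros H eps Heps. apply continuity_pt_filterlim in H.
    destruct (H eps Heps) as [d [Hd H']].
    exists d; split; auto. intros y Hy.
    destruct (Req_dec y x) as [->|Hne].
    + rewrite Rminus_diag, Rabs_R0; auto.
    + apply H'. repeat split; auto.
  - intros H. apply continuity_pt_filterlim. intros eps Heps.
    destruct (H eps Heps) as [d [Hd H']].
    exists d; split; auto. intros y [_ Hy]. apply H'; auto.
Qed.

Lemma cont_on_clampP c d g : c <= d ->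
  cont_on c d g <-> forall x, continuous (fun t => g (clamp c d t)) x.
Proof.
  intros Hcd. split.
  - intros Hg x. apply continuous_epsP. intros eps Heps.
    destruct (Hg (clamp c d x) (clamp_in c d x Hcd) eps Heps) as [dl [Hdl H]].
    exists dl; split; auto. intros y Hy. apply H. apply clamp_in; auto.
    eapply Rle_lt_trans. apply clamp_lipschitz; auto. auto.
  - intros H x Hx eps Heps.
    destruct (proj1 (continuous_epsP _ x) (H x) eps Heps) as [dl [Hdl H']].
    exists dl; split; auto. intros y Hy Hyx. specialize (H' y Hyx).
    rewrite !clamp_id in H'; auto.
Qed.

Lemma cont_on_subset c d c' d' g : c <= c' -> d' <= d ->
  cont_on c d g -> cont_on c' d' g.
Proof.
  intros H1 H2 Hg x Hx eps Heps. destruct (Hg x ltac:(lra) eps Heps) as [dl [Hdl H]].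
  exists dl; split; auto. intros y Hy Hyx; apply H; auto; lra.
Qed.

Lemma cont_on_const c d k : cont_on c d (fun _ => k).
Proof.
  intros x _ eps He. exists 1; split; [lra|].
  intros. rewrite Rminus_diag, Rabs_R0; auto.
Qed.

Lemma cont_on_plus c d F G : c <= d -> cont_on c d F -> cont_on c d G ->
  cont_on c d (fun x => F x + G x).
Proof.
  intros Hcd HF HG. apply cont_on_clampP; auto. intros x.
  apply (continuous_plus (fun t => F (clamp c d t)) (fun t => G (clamp c d t)));
  apply cont_on_clampP; auto.
Qed.

Lemma cont_on_mult c d F G : c <= d -> cont_on c d F -> cont_on c d G ->
  cont_on c d (fun x => F x * G x).
Proof.
  intros Hcd HF HG. apply cont_on_clampP; auto. intros x.
  apply (continuous_mult (fun t => F (clamp c d t)) (fun t => G (clamp c d t)));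
  apply cont_on_clampP; auto.
Qed.

Lemma cont_on_opp c d F : c <= d -> cont_on c d F -> cont_on c d (fun x => - F x).
Proof.
  intros Hcd HF. apply cont_on_clampP; auto. intros x.
  apply (continuous_opp (fun t => F (clamp c d t))); apply cont_on_clampP; auto.
Qed.

Lemma cont_on_minus c d F G : c <= d -> cont_on c d F -> cont_on c d G ->
  cont_on c d (fun x => F x - G x).
Proof.
  intros. apply (cont_on_plus c d F (fun x => - G x)); auto. apply cont_on_opp; auto.
Qed.

Lemma cont_on_inv c d F : c <= d -> cont_on c d F ->
  (forall x, c <= x <= d -> F x <> 0) -> cont_on c d (fun x => / F x).
Proof.
  intros Hcd HF Hnz. apply cont_on_clampP; auto. intros x.
  apply (continuous_comp (fun t => F (clamp c d t)) Rinv).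
  - apply cont_on_clampP; auto.
  - apply continuity_pt_filterlim, continuity_pt_inv.
    + apply continuity_pt_id.
    + apply Hnz, clamp_in; auto.
Qed.

Lemma cont_on_pow c d F n : c <= d -> cont_on c d F -> cont_on c d (fun x => F x ^ n).
Proof.
  intros Hcd HF. induction n; simpl.
  - apply cont_on_const.
  - apply cont_on_mult; auto.
Qed.

Lemma cont_on_comp3 c d G v w : cont3 G -> cont_on c d v -> cont_on c d w ->
  cont_on c d (fun x => G x (v x) (w x)).
Proof.
  intros HG Hv Hw x Hx eps Heps.
  destruct (HG x (v x) (w x) eps Heps) as [d1 [Hd1 H1]].
  destruct (Hv x Hx d1 Hd1) as [d2 [Hd2 H2]].
  destruct (Hw x Hx d1 Hd1) as [d3 [Hd3 H3]].
  exists (Rmin d1 (Rmin d2 d3)); split.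
  - repeat apply Rmin_pos; auto.
  - intros y Hy Hyx.
    assert (Rmin d1 (Rmin d2 d3) <= d1) by apply Rmin_l.
    assert (Rmin d1 (Rmin d2 d3) <= d2) by (eapply Rle_trans; [apply Rmin_r | apply Rmin_l]).
    assert (Rmin d1 (Rmin d2 d3) <= d3) by (eapply Rle_trans; [apply Rmin_r | apply Rmin_r]).
    apply H1; try lra; [apply H2 | apply H3]; auto; lra.
Qed.

Ltac solve_cont_on := repeat (first [ assumption | lra | apply cont_on_const
  | apply cont_on_plus | apply cont_on_minus | apply cont_on_mult | apply cont_on_pow
  | apply cont_on_opp | apply cont_on_comp3 ]).

Lemma continuity_pt_abs_clamp c d g : c <= d -> cont_on c d g ->
  forall t, c <= t <= d -> continuity_pt (fun t => Rabs (g (clamp c d t))) t.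
Proof.
  intros Hcd Hg t _. apply continuity_pt_filterlim.
  apply (continuous_comp (fun t => g (clamp c d t)) Rabs).
  - apply cont_on_clampP; auto.
  - apply continuity_pt_filterlim, Rcontinuity_abs.
Qed.

Lemma cont_on_bounded c d g : c <= d -> cont_on c d g ->
  exists M, 0 < M /\ forall x, c <= x <= d -> Rabs (g x) <= M.
Proof.
  intros Hcd Hg.
  destruct (continuity_ab_maj _ c d Hcd (continuity_pt_abs_clamp c d g Hcd Hg)) as [m [Hm _]].
  exists (Rabs (g (clamp c d m)) + 1). split.
  - pose proof (Rabs_pos (g (clamp c d m))); lra.
  - intros x Hx. specialize (Hm x Hx). rewrite clamp_id in Hm; auto. lra.
Qed.

Lemma cont_on_abs_bounded_below c d g : c <= d -> cont_on c d g ->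
  (forall x, c <= x <= d -> g x <> 0) ->
  exists m, 0 < m /\ forall x, c <= x <= d -> m <= Rabs (g x).
Proof.
  intros Hcd Hg Hnz.
  destruct (continuity_ab_min _ c d Hcd (continuity_pt_abs_clamp c d g Hcd Hg)) as [m [Hm Hmi]].
  exists (Rabs (g (clamp c d m))). split.
  - apply Rabs_pos_lt. rewrite clamp_id; auto.
  - intros x Hx. specialize (Hm x Hx). rewrite (clamp_id c d x) in Hm; auto.
Qed.

(** * Functions of class C^1 on a closed interval *)

Lemma deriv_within_of_is_derive c d F G x l : is_derive F x l ->
  (forall t, c <= t <= d -> F t = G t) -> c <= x <= d -> deriv_within c d G x l.
Proof.
  intros HF Heq Hx. apply is_derive_Reals in HF.
  intros eps Heps. destruct (HF eps Heps) as [dl Hdl].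
  exists dl; split; [apply cond_pos|].
  intros y Hy Hyx. rewrite <- (Heq y Hy), <- (Heq x Hx).
  destruct (Req_dec y x) as [->|Hne].
  - rewrite !Rminus_diag, Rmult_0_r, Rminus_0_r, Rabs_R0, Rmult_0_r; lra.
  - assert (Hh : y - x <> 0) by lra.
    specialize (Hdl (y - x) Hh Hyx). replace (x + (y - x)) with y in Hdl by ring.
    replace (F y - F x - l * (y - x)) with (((F y - F x) / (y - x) - l) * (y - x))
      by (field; auto).
    rewrite Rabs_mult. apply Rmult_le_compat_r; [apply Rabs_pos | lra].
Qed.

Lemma deriv_within_cont_on c d G g :
  (forall x, c <= x <= d -> deriv_within c d G x (g x)) -> cont_on c d G.
Proof.
  intros H x Hx eps Heps. destruct (H x Hx 1 Rlt_0_1) as [dl [Hdl H1]].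
  assert (Hp : 0 < 1 + Rabs (g x)) by (pose proof (Rabs_pos (g x)); lra).
  exists (Rmin dl (eps / (1 + Rabs (g x)))). split.
  { apply Rmin_pos; auto. apply Rdiv_lt_0_compat; auto. }
  intros y Hy Hyx.
  assert (Hm1 := Rmin_l dl (eps / (1 + Rabs (g x)))).
  assert (Hm2 := Rmin_r dl (eps / (1 + Rabs (g x)))).
  specialize (H1 y Hy ltac:(lra)).
  replace (G y - G x) with ((G y - G x - g x * (y - x)) + g x * (y - x)) by ring.
  eapply Rle_lt_trans; [apply Rabs_triang|]. rewrite Rabs_mult.
  assert (Rabs (y - x) * (1 + Rabs (g x)) < eps).
  { apply Rmult_lt_reg_r with (/ (1 + Rabs (g x))); [apply Rinv_0_lt_compat; auto|].
    rewrite Rmult_assoc, Rinv_r, Rmult_1_r by lra. unfold Rdiv in Hm2. lra. }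
  nra.
Qed.

(* [auto_derive] states its side conditions in Coquelicot's [R_AbsRing];
   [ring] only recognises them once they are retyped at [R]. *)
Ltac ring_R := match goal with |- ?A = ?B => change (@eq R A B) end; ring.

(* Extending by tangent lines makes a C^1 function on [c, d] differentiable
   on all of R, so that Coquelicot's derivative rules apply to it. *)
Definition tangent_ext (c d : R) (G g : R -> R) (t : R) : R :=
  G (clamp c d t) + (t - clamp c d t) * g (clamp c d t).

Lemma tangent_ext_id c d G g t : c <= t <= d -> tangent_ext c d G g t = G t.
Proof. intros H; unfold tangent_ext; rewrite clamp_id; auto; ring. Qed.

Lemma is_derive_tangent_ext c d G g : c <= d -> C1_on c d G g ->
  forall x, is_derive (tangent_ext c d G g) x (g (clamp c d x)).
Proof.
  intros Hcd [HG Hg] x. apply is_derive_Reals. intros eps Heps.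
  set (cx := clamp c d x).
  assert (Hcx : c <= cx <= d) by (apply clamp_in; auto).
  destruct (HG cx Hcx (eps/4) ltac:(lra)) as [d1 [Hd1 H1]].
  destruct (Hg cx Hcx (eps/4) ltac:(lra)) as [d2 [Hd2 H2]].
  assert (Hmp : 0 < Rmin d1 d2) by (apply Rmin_pos; auto).
  exists (mkposreal _ Hmp). intros hh Hh0 Hh. simpl in Hh.
  assert (Hm1 := Rmin_l d1 d2). assert (Hm2 := Rmin_r d1 d2).
  set (t := x + hh). set (ct := clamp c d t).
  assert (Hct : c <= ct <= d) by (apply clamp_in; auto).
  assert (Hl : Rabs (ct - cx) <= Rabs hh).
  { unfold ct, cx. replace hh with (t - x) by (unfold t; ring). apply clamp_lipschitz; auto. }
  assert (Hkey : Rabs (tangent_ext c d G g t - tangent_ext c d G g x - g cx * hh)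
                 <= eps / 2 * Rabs hh).
  { unfold tangent_ext. fold cx ct.
    replace (G ct + (t - ct) * g ct - (G cx + (x - cx) * g cx) - g cx * hh)
      with ((G ct - G cx - g cx * (ct - cx)) + (t - ct) * (g ct - g cx))
      by (unfold t; ring).
    eapply Rle_trans; [apply Rabs_triang|].
    assert (A1 : Rabs (G ct - G cx - g cx * (ct - cx)) <= eps / 4 * Rabs hh).
    { eapply Rle_trans; [apply H1; auto; lra|]. apply Rmult_le_compat_l; lra. }
    assert (A2 : Rabs ((t - ct) * (g ct - g cx)) <= eps / 4 * Rabs hh).
    { destruct (Req_dec ct cx) as [E|E].
      - rewrite E, Rminus_diag, Rmult_0_r, Rabs_R0. pose proof (Rabs_pos hh). nra.
      - rewrite Rabs_mult.
        assert (Rabs (t - ct) <= Rabs hh).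
        { replace hh with (t - x) by (unfold t; ring). apply clamp_dist_le; auto. }
        assert (Rabs (g ct - g cx) < eps / 4) by (apply H2; auto; lra).
        pose proof (Rabs_pos (t - ct)). pose proof (Rabs_pos (g ct - g cx)). nra. }
    lra. }
  replace ((tangent_ext c d G g t - tangent_ext c d G g x) / hh - g cx)
    with ((tangent_ext c d G g t - tangent_ext c d G g x - g cx * hh) / hh) by (field; auto).
  unfold Rdiv. rewrite Rabs_mult, Rabs_inv.
  apply Rmult_le_compat_r with (r := / Rabs hh) in Hkey.
  2:{ apply Rlt_le, Rinv_0_lt_compat, Rabs_pos_lt; auto. }
  rewrite Rmult_assoc, Rinv_r in Hkey; [lra | apply Rabs_no_R0; auto].
Qed.

Lemma C1_on_cont_on c d G g : C1_on c d G g -> cont_on c d G.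
Proof. intros [H _]. eapply deriv_within_cont_on; eauto. Qed.

Lemma C1_on_subset c d c' d' G g : c <= c' -> d' <= d ->
  C1_on c d G g -> C1_on c' d' G g.
Proof.
  intros H1 H2 [HG Hg]. split.
  - intros x Hx eps He. destruct (HG x ltac:(lra) eps He) as [dl [Hdl H]].
    exists dl; split; auto. intros y Hy Hyx; apply H; auto; lra.
  - eapply cont_on_subset; eauto.
Qed.

Lemma C1_on_ext c d F f G g : C1_on c d F f ->
  (forall x, c <= x <= d -> F x = G x) -> (forall x, c <= x <= d -> f x = g x) ->
  C1_on c d G g.
Proof.
  intros [HF Hf] E1 E2. split.
  - intros x Hx eps He. destruct (HF x Hx eps He) as [dl [Hdl H]].
    exists dl; split; auto. intros y Hy Hyx. rewrite <- !E1, <- E2; auto.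
  - intros x Hx eps He. destruct (Hf x Hx eps He) as [dl [Hdl H]].
    exists dl; split; auto. intros y Hy Hyx. rewrite <- !E2; auto.
Qed.

Lemma C1_on_of_is_derive c d G g : (forall t, is_derive G t (g t)) ->
  (forall t, continuous g t) -> C1_on c d G g.
Proof.
  intros HG Hg. split.
  - intros x Hx. apply deriv_within_of_is_derive with G; auto.
  - intros x Hx eps He. destruct (proj1 (continuous_epsP g x) (Hg x) eps He) as [dl [Hdl H]].
    exists dl; split; auto.
Qed.

Lemma C1_on_const c d (k : R) : C1_on c d (fun _ => k) (fun _ => 0).
Proof.
  apply C1_on_of_is_derive.
  - intros; apply (@is_derive_const R_AbsRing R_NormedModule).
  - intros; apply continuous_const.
Qed.

Lemma C1_on_plus c d F f G g : c <= d -> C1_on c d F f -> C1_on c d G g ->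
  C1_on c d (fun x => F x + G x) (fun x => f x + g x).
Proof.
  intros Hcd HF HG. split.
  - intros x Hx.
    apply deriv_within_of_is_derive
      with (fun t => tangent_ext c d F f t + tangent_ext c d G g t); auto.
    + pose proof (is_derive_tangent_ext c d F f Hcd HF x) as D1.
      pose proof (is_derive_tangent_ext c d G g Hcd HG x) as D2.
      rewrite clamp_id in D1, D2; auto.
      exact (is_derive_plus _ _ x _ _ D1 D2).
    + intros t Ht. rewrite !tangent_ext_id; auto.
  - apply cont_on_plus; auto; [apply HF | apply HG].
Qed.

Lemma C1_on_mult c d F f G g : c <= d -> C1_on c d F f -> C1_on c d G g ->
  C1_on c d (fun x => F x * G x) (fun x => f x * G x + F x * g x).
Proof.
  intros Hcd HF HG. split.
  - intros x Hx.
    apply deriv_within_of_is_derive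
      with (fun t => tangent_ext c d F f t * tangent_ext c d G g t); auto.
    + pose proof (is_derive_tangent_ext c d F f Hcd HF x) as D1.
      pose proof (is_derive_tangent_ext c d G g Hcd HG x) as D2.
      rewrite clamp_id in D1, D2; auto.
      pose proof (is_derive_mult _ _ x _ _ D1 D2 Rmult_comm) as D.
      rewrite (tangent_ext_id c d F f x), (tangent_ext_id c d G g x) in D; auto.
    + intros t Ht. rewrite !tangent_ext_id; auto.
  - pose proof (C1_on_cont_on c d _ _ HF). pose proof (C1_on_cont_on c d _ _ HG).
    destruct HF, HG. solve_cont_on.
Qed.

Lemma C1_on_scal c d k F f : c <= d -> C1_on c d F f ->
  C1_on c d (fun x => k * F x) (fun x => k * f x).
Proof.
  intros Hcd HF. eapply C1_on_ext.
  - apply (C1_on_mult c d (fun _ => k) (fun _ => 0) F f); auto. apply C1_on_const.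
  - reflexivity.
  - intros; simpl; ring.
Qed.

Lemma C1_on_inv c d F f : c <= d -> C1_on c d F f ->
  (forall x, c <= x <= d -> F x <> 0) ->
  C1_on c d (fun x => / F x) (fun x => - f x / F x ^ 2).
Proof.
  intros Hcd HF Hnz. split.
  - intros x Hx.
    apply deriv_within_of_is_derive with (fun t => / tangent_ext c d F f t); auto.
    + pose proof (is_derive_tangent_ext c d F f Hcd HF x) as D1. rewrite clamp_id in D1; auto.
      pose proof (is_derive_inv _ x _ D1) as D. rewrite tangent_ext_id in D; auto.
    + intros t Ht. rewrite !tangent_ext_id; auto.
  - pose proof (C1_on_cont_on c d _ _ HF). destruct HF.
    unfold Rdiv. apply cont_on_mult, cont_on_inv; solve_cont_on.
    intros x Hx. apply pow_nonzero; auto.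
Qed.

Lemma C1_on_exp c d k z :
  C1_on c d (fun t => exp (k * (t - z))) (fun t => k * exp (k * (t - z))).
Proof.
  apply C1_on_of_is_derive.
  - intros t.
    assert (D : is_derive (fun t => exp (k * (t - z))) t (k * (1 - 0) * exp (k * (t - z)))).
    { auto_derive; [exact I | unfold Rminus; ring_R]. }
    rewrite Rminus_0_r, Rmult_1_r in D. exact D.
  - intros t. apply (@ex_derive_continuous R_AbsRing R_NormedModule). auto_derive. exact I.
Qed.

(** * Riemann integrals of continuous functions on [c, d] *)

Lemma ex_RInt_on c d g : c <= d -> cont_on c d g -> ex_RInt g c d.
Proof.
  intros Hcd Hg. apply ex_RInt_ext with (fun t => g (clamp c d t)).
  - intros x Hx. rewrite Rmin_left, Rmax_right in Hx; auto. rewrite clamp_id; auto; lra.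
  - apply (@ex_RInt_continuous R_CompleteNormedModule). intros z _.
    apply cont_on_clampP; auto.
Qed.

Lemma RInt_ext_on c d (F G : R -> R) : c <= d ->
  (forall x, c <= x <= d -> F x = G x) -> RInt F c d = RInt G c d :> R.
Proof.
  intros Hcd H. apply RInt_ext. intros x Hx. rewrite Rmin_left, Rmax_right in Hx; auto.
  apply H; lra.
Qed.

Lemma RInt_C1_on c d G g : c <= d -> C1_on c d G g -> RInt g c d = G d - G c :> R.
Proof.
  intros Hcd HG.
  assert (HI : is_RInt (fun t => g (clamp c d t)) c d
                 (minus (tangent_ext c d G g d) (tangent_ext c d G g c))).
  { apply (@is_RInt_derive R_CompleteNormedModule).
    - intros x _. apply is_derive_tangent_ext; auto.
    - intros x _. apply cont_on_clampP; auto. apply HG. }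
  rewrite (tangent_ext_id c d G g d), (tangent_ext_id c d G g c) in HI by lra.
  apply (@is_RInt_unique R_CompleteNormedModule) in HI.
  change (RInt (fun t => g (clamp c d t)) c d = G d - G c) in HI.
  rewrite <- HI. apply RInt_ext_on; auto. intros x Hx. rewrite clamp_id; auto.
Qed.

Lemma RInt_plus_on c d F G : c <= d -> cont_on c d F -> cont_on c d G ->
  RInt (fun x => F x + G x) c d = RInt F c d + RInt G c d :> R.
Proof. intros. exact (RInt_plus F G c d (ex_RInt_on c d F H H0) (ex_RInt_on c d G H H1)). Qed.

Lemma RInt_minus_on c d F G : c <= d -> cont_on c d F -> cont_on c d G ->
  RInt (fun x => F x - G x) c d = RInt F c d - RInt G c d :> R.
Proof. intros. exact (RInt_minus F G c d (ex_RInt_on c d F H H0) (ex_RInt_on c d G H H1)). Qed.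

Lemma RInt_scal_on c d k F : c <= d -> cont_on c d F ->
  RInt (fun x => k * F x) c d = k * RInt F c d :> R.
Proof. intros. exact (RInt_scal F c d k (ex_RInt_on c d F H H0)). Qed.

Lemma RInt_const_on c d (k : R) : RInt (fun _ => k) c d = (d - c) * k :> R.
Proof. rewrite RInt_const. reflexivity. Qed.

Lemma RInt_le_on c d F G : c <= d -> cont_on c d F -> cont_on c d G ->
  (forall x, c <= x <= d -> F x <= G x) -> RInt F c d <= RInt G c d.
Proof.
  intros. apply RInt_le; auto; try apply ex_RInt_on; auto. intros; apply H2; lra.
Qed.

Lemma RInt_ge0_on c d F : c <= d -> cont_on c d F ->
  (forall x, c <= x <= d -> 0 <= F x) -> 0 <= RInt F c d.
Proof.
  intros. apply RInt_ge_0; auto; try apply ex_RInt_on; auto. intros; apply H1; lra.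
Qed.

Lemma RInt_le0_on c d F : c <= d -> cont_on c d F ->
  (forall x, c <= x <= d -> F x <= 0) -> RInt F c d <= 0.
Proof.
  intros Hcd HF H. assert (0 <= RInt (fun x => -1 * F x) c d).
  { apply RInt_ge0_on; auto; [solve_cont_on|]. intros x Hx; specialize (H x Hx); lra. }
  rewrite RInt_scal_on in H0; auto. lra.
Qed.

Lemma RInt_abs_le_on c d F G : c <= d -> cont_on c d F -> cont_on c d G ->
  (forall x, c <= x <= d -> Rabs (F x) <= G x) -> Rabs (RInt F c d) <= RInt G c d.
Proof.
  intros Hcd HF HG H. apply Rabs_le. split.
  - rewrite <- (Rmult_1_l (RInt G c d)), Ropp_mult_distr_l, <- RInt_scal_on; auto.
    apply RInt_le_on; auto; [solve_cont_on|].
    intros x Hx; specialize (H x Hx); apply Rabs_le_between in H; lra.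
  - apply RInt_le_on; auto. intros x Hx; specialize (H x Hx).
    eapply Rle_trans; [apply Rle_abs | auto].
Qed.

Lemma RInt_abs_bound_on c d F K : c <= d -> cont_on c d F ->
  (forall x, c <= x <= d -> Rabs (F x) <= K) -> Rabs (RInt F c d) <= K * (d - c).
Proof.
  intros. rewrite <- (Rmult_comm (d - c)), <- RInt_const_on.
  apply RInt_abs_le_on; auto. apply cont_on_const.
Qed.

Lemma RInt_Chasles_on c m d F : c <= m -> m <= d -> cont_on c d F ->
  RInt F c m + RInt F m d = RInt F c d :> R.
Proof.
  intros H1 H2 HF.
  exact (RInt_Chasles F c m d (ex_RInt_on c m F H1 (cont_on_subset c d c m F ltac:(lra) H2 HF))
                             (ex_RInt_on m d F H2 (cont_on_subset c d m d F H1 ltac:(lra) HF))).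
Qed.

Lemma RInt_Chasles_gap_abs_le c m1 m2 d F K : c <= m1 -> m1 <= m2 -> m2 <= d ->
  cont_on c d F -> (forall x, m1 <= x <= m2 -> Rabs (F x) <= K) ->
  Rabs (RInt F c m1 + RInt F m2 d - RInt F c d) <= K * (m2 - m1).
Proof.
  intros H1 H2 H3 HF HK.
  rewrite <- (RInt_Chasles_on c m1 d F), <- (RInt_Chasles_on m1 m2 d F); try lra; auto;
    [| eapply cont_on_subset; eauto; lra].
  replace (RInt F c m1 + RInt F m2 d - (RInt F c m1 + (RInt F m1 m2 + RInt F m2 d)))
    with (- RInt F m1 m2) by ring.
  rewrite Rabs_Ropp. apply RInt_abs_bound_on; auto. eapply cont_on_subset; eauto; lra.
Qed.

Lemma C1_on_lipschitz a b g dg L c d : C1_on a b g dg -> a <= c -> c <= d -> d <= b ->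
  (forall x, c <= x <= d -> Rabs (dg x) <= L) -> Rabs (g d - g c) <= L * (d - c).
Proof.
  intros Hg H1 H2 H3 HL.
  rewrite <- (RInt_C1_on c d g dg H2 (C1_on_subset a b c d g dg H1 H3 Hg)).
  apply RInt_abs_bound_on; auto. apply (cont_on_subset a b); auto. apply Hg.
Qed.

(** * Taylor estimates *)

Lemma MVT_abs_le (phi dphi : R -> R) A B K :
  (forall s, Rmin A B <= s <= Rmax A B -> is_derive phi s (dphi s) /\ Rabs (dphi s) <= K) ->
  Rabs (phi B - phi A) <= K * Rabs (B - A).
Proof.
  intros H.
  destruct (MVT_gen phi A B dphi) as [cc [Hc E]].
  - intros x Hx. apply H; lra.
  - intros x Hx. apply continuity_pt_filterlim.
    apply (@ex_derive_continuous R_AbsRing R_NormedModule).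
    eexists; apply (proj1 (H x Hx)).
  - rewrite E, Rabs_mult. apply Rmult_le_compat_r; [apply Rabs_pos | apply H; auto].
Qed.

Lemma segment_dist_le A al s :
  Rmin A (A + al) <= s <= Rmax A (A + al) -> Rabs (s - A) <= Rabs al.
Proof. unfold Rmin, Rmax; destruct Rle_dec; unfold Rabs; repeat destruct Rcase_abs; lra. Qed.

Lemma is_derive_quadratic c0 c1 c2 A s :
  is_derive (fun s => c0 + c1 * (s - A) + c2 * (s - A) ^ 2) s (c1 + 2 * c2 * (s - A)).
Proof. auto_derive; [exact I | ring_R]. Qed.

Lemma taylor1_remainder_le (phi phi1 : R -> R) A al k eps :
  (forall s, is_derive phi s (phi1 s)) ->
  (forall s, Rmin A (A + al) <= s <= Rmax A (A + al) -> Rabs (phi1 s - k) <= eps) ->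
  Rabs (phi (A + al) - phi A - k * al) <= eps * Rabs al.
Proof.
  intros D Hb.
  set (psi := fun s => phi s - (0 + k * (s - A) + 0 * (s - A) ^ 2)).
  replace (phi (A + al) - phi A - k * al) with (psi (A + al) - psi A) by (unfold psi; ring).
  apply Rle_trans with (eps * Rabs (A + al - A)); [| right; f_equal; f_equal; ring].
  apply (MVT_abs_le psi (fun s => phi1 s - k)).
  intros s Hs. split; auto.
  replace (phi1 s - k) with (phi1 s - (k + 2 * 0 * (s - A))) by ring.
  apply (is_derive_minus phi (fun s => 0 + k * (s - A) + 0 * (s - A) ^ 2));
    [auto | apply is_derive_quadratic].
Qed.

Lemma taylor2_remainder_le (phi phi1 phi2 : R -> R) A al k eps :
  (forall s, is_derive phi s (phi1 s)) -> (forall s, is_derive phi1 s (phi2 s)) ->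
  (forall s, Rmin A (A + al) <= s <= Rmax A (A + al) -> Rabs (phi2 s - k) <= eps) ->
  Rabs (phi (A + al) - phi A - phi1 A * al - / 2 * k * al ^ 2) <= eps * al ^ 2.
Proof.
  intros D1 D2 Hb.
  set (psi := fun s => phi s - (phi A + phi1 A * (s - A) + / 2 * k * (s - A) ^ 2)).
  replace (phi (A + al) - phi A - phi1 A * al - / 2 * k * al ^ 2) with (psi (A + al) - psi A)
    by (unfold psi; ring).
  assert (Heps : 0 <= eps).
  { eapply Rle_trans; [apply Rabs_pos | apply (Hb A)].
    unfold Rmin, Rmax; repeat destruct Rle_dec; lra. }
  apply Rle_trans with ((eps * Rabs al) * Rabs ((A + al) - A)).
  2:{ replace (A + al - A) with al by ring.
      rewrite Rmult_assoc, <- Rabs_mult, Rabs_pos_eq; nra. }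
  apply (MVT_abs_le psi (fun s => phi1 s - phi1 A - k * (s - A))).
  intros s Hs. split.
  - replace (phi1 s - phi1 A - k * (s - A))
      with (phi1 s - (phi1 A + 2 * (/ 2 * k) * (s - A))) by field.
    apply (is_derive_minus phi (fun s => phi A + phi1 A * (s - A) + / 2 * k * (s - A) ^ 2));
      [auto | apply is_derive_quadratic].
  - pose proof (taylor1_remainder_le phi1 phi2 A (s - A) k eps D2) as T.
    replace (A + (s - A)) with s in T by ring.
    eapply Rle_trans; [apply T|].
    + intros s' Hs'. apply Hb. revert Hs Hs'.
      unfold Rmin, Rmax; repeat destruct Rle_dec; intros; lra.
    + apply Rmult_le_compat_l; auto. apply segment_dist_le; auto.
Qed.

(* Expand first in [p] at [A + al], then in [u], and correct the mixed term. *)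
Lemma taylor2_2d_remainder_le (F Fu Fp Fuu Fpp Fpu : R -> R -> R) A B al be eps delta :
  (forall u p, is_derive (fun s => F s p) u (Fu u p)) ->
  (forall u p, is_derive (fun s => F u s) p (Fp u p)) ->
  (forall u p, is_derive (fun s => Fu s p) u (Fuu u p)) ->
  (forall u p, is_derive (fun s => Fp u s) p (Fpp u p)) ->
  (forall u p, is_derive (fun s => Fp s p) u (Fpu u p)) ->
  (forall u p, Rabs (u - A) <= delta -> Rabs (p - B) <= delta ->
     Rabs (Fuu u p - Fuu A B) <= eps /\ Rabs (Fpp u p - Fpp A B) <= eps /\
     Rabs (Fpu u p - Fpu A B) <= eps) ->
  Rabs al <= delta -> Rabs be <= delta ->
  Rabs (F (A + al) (B + be) - F A B - Fu A B * al - Fp A B * be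
        - / 2 * (Fuu A B * al ^ 2 + 2 * Fpu A B * al * be + Fpp A B * be ^ 2))
    <= 2 * eps * (al ^ 2 + be ^ 2).
Proof.
  intros Du Dp Duu Dpp Dpu Hbox Hal Hbe.
  assert (Hdelta : 0 <= delta) by (eapply Rle_trans; [apply Rabs_pos | eauto]).
  assert (Hbox0 := Hbox A B).
  rewrite !Rminus_diag, !Rabs_R0 in Hbox0. destruct (Hbox0 Hdelta Hdelta) as [Heps _].
  assert (B2 : Rabs (F (A + al) B - F A B - Fu A B * al - / 2 * Fuu A B * al ^ 2)
               <= eps * al ^ 2).
  { apply (taylor2_remainder_le (fun s => F s B) (fun s => Fu s B) (fun s => Fuu s B));
      [intros s; apply Du | intros s; apply Duu |].
    intros s Hs. apply Hbox; [eapply Rle_trans; [apply segment_dist_le; eauto | auto] |].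
    rewrite Rminus_diag, Rabs_R0; auto. }
  assert (B1 : Rabs (F (A + al) (B + be) - F (A + al) B - Fp (A + al) B * be
                     - / 2 * Fpp A B * be ^ 2) <= eps * be ^ 2).
  { apply (taylor2_remainder_le (fun s => F (A + al) s) (fun s => Fp (A + al) s)
             (fun s => Fpp (A + al) s)); [intros s; apply Dp | intros s; apply Dpp |].
    intros s Hs. apply Hbox; [replace (A + al - A) with al by ring; auto |].
    eapply Rle_trans; [apply segment_dist_le; eauto | auto]. }
  assert (B3 : Rabs (Fp (A + al) B - Fp A B - Fpu A B * al) <= eps * Rabs al).
  { apply (taylor1_remainder_le (fun s => Fp s B) (fun s => Fpu s B)); [intros s; apply Dpu |].
    intros s Hs. apply Hbox; [eapply Rle_trans; [apply segment_dist_le; eauto | auto] |].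
    rewrite Rminus_diag, Rabs_R0; auto. }
  replace (F (A + al) (B + be) - F A B - Fu A B * al - Fp A B * be
        - / 2 * (Fuu A B * al ^ 2 + 2 * Fpu A B * al * be + Fpp A B * be ^ 2))
    with ((F (A + al) (B + be) - F (A + al) B - Fp (A + al) B * be - / 2 * Fpp A B * be ^ 2)
          + (F (A + al) B - F A B - Fu A B * al - / 2 * Fuu A B * al ^ 2)
          + be * (Fp (A + al) B - Fp A B - Fpu A B * al)) by field.
  eapply Rle_trans; [apply Rabs_triang|].
  eapply Rle_trans;
    [apply Rplus_le_compat; [apply Rabs_triang | rewrite Rabs_mult; apply Rle_refl]|].
  assert (Rabs be * Rabs (Fp (A + al) B - Fp A B - Fpu A B * al) <= Rabs be * (eps * Rabs al))
    by (apply Rmult_le_compat_l; auto; apply Rabs_pos).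
  assert (Rabs be * Rabs al <= al ^ 2 + be ^ 2).
  { rewrite <- (pow2_abs al), <- (pow2_abs be).
    pose proof (Rabs_pos al); pose proof (Rabs_pos be). nra. }
  assert (0 <= al ^ 2) by nra. assert (0 <= be ^ 2) by nra.
  nra.
Qed.

(** * Integrands of class C^3 *)

Lemma Ck3_cont n g : Ck3 n g -> cont3 g.
Proof. destruct n; simpl; tauto. Qed.

Lemma Ck3_Du n g : Ck3 (S n) g -> Ck3 n (Du g).
Proof. simpl; tauto. Qed.

Lemma Ck3_Dp n g : Ck3 (S n) g -> Ck3 n (Dp g).
Proof. simpl; tauto. Qed.

Lemma is_derive_Du n g x u p : Ck3 (S n) g -> is_derive (fun t => g x t p) u (Du g x u p).
Proof. intros [_ [E _]]. apply Derive_correct, (E x u p). Qed.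

Lemma is_derive_Dp n g x u p : Ck3 (S n) g -> is_derive (fun t => g x u t) p (Dp g x u p).
Proof. intros [_ [E _]]. apply Derive_correct, (E x u p). Qed.

Lemma Ck3_3_partials_cont f : Ck3 3 f ->
  cont3 f /\ cont3 (fp f) /\ cont3 (fu f) /\ cont3 (fpp f) /\ cont3 (fpu f) /\
  cont3 (fup f) /\ cont3 (fuu f).
Proof.
  intros H. unfold fp, fu, fpp, fpu, fup, fuu.
  repeat split.
  - apply (Ck3_cont 3); auto.
  - apply (Ck3_cont 2); apply Ck3_Dp; auto.
  - apply (Ck3_cont 2); apply Ck3_Du; auto.
  - apply (Ck3_cont 1); apply Ck3_Dp; apply Ck3_Dp; auto.
  - apply (Ck3_cont 1); apply Ck3_Du; apply Ck3_Dp; auto.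
  - apply (Ck3_cont 1); apply Ck3_Dp; apply Ck3_Du; auto.
  - apply (Ck3_cont 1); apply Ck3_Du; apply Ck3_Du; auto.
Qed.

Lemma fpu_fup f x u p : Ck3 3 f -> fpu f x u p = fup f x u p.
Proof.
  intros Hf. unfold fpu, fup, Du, Dp.
  assert (H1 : Ck3 2 (Du f)) by (apply Ck3_Du; auto).
  assert (H2 : Ck3 2 (Dp f)) by (apply Ck3_Dp; auto).
  assert (C1 : cont3 (Du (Dp f))) by (apply (Ck3_cont 1); apply Ck3_Du; auto).
  assert (C2 : cont3 (Dp (Du f))) by (apply (Ck3_cont 1); apply Ck3_Dp; auto).
  apply (Schwarz (fun u p => f x u p)).
  - apply locally_2d_forall. intros u' v'.
    destruct Hf as [_ [E _]]. destruct (E x u' v') as [_ [E1 E2]].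
    destruct H2 as [_ [E' _]]. destruct (E' x u' v') as [_ [E3 _]].
    destruct H1 as [_ [E'' _]]. destruct (E'' x u' v') as [_ [_ E4]].
    repeat split; auto.
  - intros eps. destruct (C1 x u p eps (cond_pos eps)) as [dl [Hdl H]].
    exists (mkposreal dl Hdl). intros u' v' Hu Hv. simpl in *.
    apply (H x u' v'); auto. rewrite Rminus_diag, Rabs_R0; auto.
  - intros eps. destruct (C2 x u p eps (cond_pos eps)) as [dl [Hdl H]].
    exists (mkposreal dl Hdl). intros u' v' Hu Hv. simpl in *.
    apply (H x u' v'); auto. rewrite Rminus_diag, Rabs_R0; auto.
Qed.

Lemma cont_on_along a b G u0 du0 : cont3 G -> C1_on a b u0 du0 ->
  cont_on a b (along G u0 du0).
Proof.
  intros HG Hu. unfold along. apply cont_on_comp3; auto.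
  - eapply C1_on_cont_on; eauto.
  - apply Hu.
Qed.

(* Via a Lebesgue number ([compactness_value_1d]) of a cover of [c, d]. *)
Lemma cont3_unif_near_curve c d G v w : c <= d -> cont3 G -> cont_on c d v -> cont_on c d w ->
  forall eps, 0 < eps -> exists delta, 0 < delta /\
    forall x u p, c <= x <= d -> Rabs (u - v x) <= delta -> Rabs (p - w x) <= delta ->
      Rabs (G x u p - G x (v x) (w x)) <= eps.
Proof.
  intros Hcd HG Hv Hw eps Heps.
  set (P := fun t (rho : posreal) => c <= t <= d -> forall x' u p, c <= x' <= d ->
     Rabs (x' - t) < rho -> Rabs (u - v x') < rho -> Rabs (p - w x') < rho ->
     Rabs (G x' u p - G t (v t) (w t)) < eps / 2).
  assert (Hex : forall t, exists rho, P t rho).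
  { intros t. destruct (Rle_dec c t) as [H1|H1]; [destruct (Rle_dec t d) as [H2|H2]|].
    2,3: exists (mkposreal 1 Rlt_0_1); intros Ht; lra.
    destruct (HG t (v t) (w t) (eps/2) ltac:(lra)) as [s [Hs HGs]].
    destruct (Hv t ltac:(lra) (s/2) ltac:(lra)) as [s1 [Hs1 Hv1]].
    destruct (Hw t ltac:(lra) (s/2) ltac:(lra)) as [s2 [Hs2 Hw2]].
    assert (Hr : 0 < Rmin (s/2) (Rmin s1 s2)) by (repeat apply Rmin_pos; lra).
    exists (mkposreal _ Hr). intros Ht x' u p Hx' H1' H2' H3'. simpl in *.
    assert (A1 := Rmin_l (s/2) (Rmin s1 s2)).
    assert (A2 := Rmin_l s1 s2). assert (A3 := Rmin_r s1 s2).
    assert (A4 := Rmin_r (s/2) (Rmin s1 s2)).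
    apply HGs; [lra | |].
    - specialize (Hv1 x' Hx' ltac:(lra)).
      replace (u - v t) with ((u - v x') + (v x' - v t)) by ring.
      eapply Rle_lt_trans; [apply Rabs_triang | lra].
    - specialize (Hw2 x' Hx' ltac:(lra)).
      replace (p - w t) with ((p - w x') + (w x' - w t)) by ring.
      eapply Rle_lt_trans; [apply Rabs_triang | lra]. }
  set (rho := fun t => proj1_sig (constructive_indefinite_description _ (Hex t))).
  assert (Hrho : forall t, P t (rho t)).
  { intros t. unfold rho. destruct (constructive_indefinite_description _ (Hex t)); auto. }
  destruct (compactness_value_1d c d rho) as [D HD].
  exists (D / 2). split; [pose proof (cond_pos D); lra|].
  intros x u p Hx Hu Hp.
  apply Rnot_lt_le. intros Hc. apply (HD x Hx). intros [t [Ht [Hxt HDt]]].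
  pose proof (cond_pos D).
  assert (E1 := Hrho t Ht x u p Hx Hxt ltac:(lra) ltac:(lra)).
  assert (E2 := Hrho t Ht x (v x) (w x) Hx Hxt).
  rewrite !Rminus_diag, !Rabs_R0 in E2.
  specialize (E2 (cond_pos _) (cond_pos _)).
  assert (Rabs (G x u p - G x (v x) (w x)) < eps).
  { replace (G x u p - G x (v x) (w x)) with
      ((G x u p - G t (v t) (w t)) - (G x (v x) (w x) - G t (v t) (w t))) by ring.
    eapply Rle_lt_trans; [apply Rabs_triang|]. rewrite Rabs_Ropp. lra. }
  lra.
Qed.

(** * The second variation *)

Definition second_var_integrand f (u0 du0 : R -> R) (x e de : R) : R :=
  along (fuu f) u0 du0 x * e ^ 2 + 2 * along (fpu f) u0 du0 x * e * de
  + along (fpp f) u0 du0 x * de ^ 2.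

Definition second_variation a b f (u0 du0 e de : R -> R) : R :=
  RInt (fun x => second_var_integrand f u0 du0 x (e x) (de x)) a b.

Definition second_order_remainder f (u0 du0 : R -> R) (x e de : R) : R :=
  f x (u0 x + e) (du0 x + de) - f x (u0 x) (du0 x)
  - fu f x (u0 x) (du0 x) * e - fp f x (u0 x) (du0 x) * de
  - / 2 * second_var_integrand f u0 du0 x e de.

Definition H1_norm2 a b (e de : R -> R) : R := RInt (fun x => e x ^ 2 + de x ^ 2) a b.

Lemma H1_norm2_ge0 a b e de : a <= b -> cont_on a b e -> cont_on a b de ->
  0 <= H1_norm2 a b e de.
Proof. intros. apply RInt_ge0_on; [auto | solve_cont_on | intros; nra]. Qed.

Lemma H1_norm2_scal a b t e de : a <= b -> cont_on a b e -> cont_on a b de ->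
  H1_norm2 a b (fun x => t * e x) (fun x => t * de x) = t ^ 2 * H1_norm2 a b e de.
Proof.
  intros. unfold H1_norm2. rewrite <- RInt_scal_on; [| auto | solve_cont_on].
  apply RInt_ext_on; auto. intros; ring.
Qed.

Section SecondVariation.

Variables (a b : R) (f : R -> R -> R -> R) (u0 du0 : R -> R).
Hypotheses (Hab : a < b) (Hf : Ck3 3 f) (Hu0 : C1_on a b u0 du0).

Lemma cont_on_coefficients :
  cont_on a b (along (fu f) u0 du0) /\ cont_on a b (along (fpp f) u0 du0) /\
  cont_on a b (along (fpu f) u0 du0) /\ cont_on a b (along (fup f) u0 du0) /\
  cont_on a b (along (fuu f) u0 du0).
Proof.
  destruct (Ck3_3_partials_cont f Hf) as [_ [_ [C3 [C4 [C5 [C6 C7]]]]]].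
  repeat split; apply cont_on_along; auto.
Qed.

Lemma cont_on_second_var_integrand e de : cont_on a b e -> cont_on a b de ->
  cont_on a b (fun x => second_var_integrand f u0 du0 x (e x) (de x)).
Proof.
  intros. destruct cont_on_coefficients as [_ [? [? [_ ?]]]].
  unfold second_var_integrand. solve_cont_on.
Qed.

Lemma second_variation_scal t e de : cont_on a b e -> cont_on a b de ->
  second_variation a b f u0 du0 (fun x => t * e x) (fun x => t * de x)
  = t ^ 2 * second_variation a b f u0 du0 e de.
Proof.
  intros. unfold second_variation.
  rewrite <- RInt_scal_on; [| lra | apply cont_on_second_var_integrand; auto].
  apply RInt_ext_on; [lra|]. intros. unfold second_var_integrand. ring.
Qed.

Hypothesis Hextremal : forall x, a <= x <= b ->
  deriv_within a b (along (fp f) u0 du0) x (along (fu f) u0 du0 x).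
Hypotheses (Hfp_a : along (fp f) u0 du0 a = 0) (Hfp_b : along (fp f) u0 du0 b = 0).

Lemma first_variation_zero e de : C1_on a b e de ->
  RInt (fun x => along (fu f) u0 du0 x * e x + along (fp f) u0 du0 x * de x) a b = 0 :> R.
Proof.
  intros He. destruct cont_on_coefficients as [Cfu _].
  rewrite (RInt_C1_on a b (fun x => along (fp f) u0 du0 x * e x)); [| lra |].
  - rewrite Hfp_a, Hfp_b. ring.
  - apply (C1_on_mult a b _ (along (fu f) u0 du0)); [lra | split | ]; auto.
Qed.

Lemma second_order_remainder_le eps : 0 < eps -> exists delta, 0 < delta /\
  forall x e de, a <= x <= b -> Rabs e <= delta -> Rabs de <= delta ->
  Rabs (second_order_remainder f u0 du0 x e de) <= eps * (e ^ 2 + de ^ 2).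
Proof.
  intros Heps.
  destruct (Ck3_3_partials_cont f Hf) as [_ [_ [_ [Cfpp [Cfpu [_ Cfuu]]]]]].
  assert (Cu0 : cont_on a b u0) by (eapply C1_on_cont_on; eauto).
  assert (Cdu0 : cont_on a b du0) by apply Hu0.
  destruct (cont3_unif_near_curve a b (fuu f) u0 du0 ltac:(lra) Cfuu Cu0 Cdu0 (eps/2)
              ltac:(lra)) as [d1 [Hd1 U1]].
  destruct (cont3_unif_near_curve a b (fpp f) u0 du0 ltac:(lra) Cfpp Cu0 Cdu0 (eps/2)
              ltac:(lra)) as [d2 [Hd2 U2]].
  destruct (cont3_unif_near_curve a b (fpu f) u0 du0 ltac:(lra) Cfpu Cu0 Cdu0 (eps/2)
              ltac:(lra)) as [d3 [Hd3 U3]].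
  set (delta := Rmin d1 (Rmin d2 d3)).
  assert (M1 : delta <= d1) by apply Rmin_l.
  assert (M2 : delta <= d2) by (eapply Rle_trans; [apply Rmin_r | apply Rmin_l]).
  assert (M3 : delta <= d3) by (eapply Rle_trans; [apply Rmin_r | apply Rmin_r]).
  exists delta. split; [repeat apply Rmin_pos; auto|].
  intros x e de Hx He Hde.
  replace eps with (2 * (eps / 2)) by field.
  unfold second_order_remainder, second_var_integrand, along.
  apply (taylor2_2d_remainder_le (f x) (fu f x) (fp f x) (fuu f x) (fpp f x) (fpu f x)
           (u0 x) (du0 x) e de (eps/2) delta); auto.
  - intros u p. apply (is_derive_Du 2); auto.
  - intros u p. apply (is_derive_Dp 2); auto.
  - intros u p. apply (is_derive_Du 1). apply Ck3_Du; auto.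
  - intros u p. apply (is_derive_Dp 1). apply Ck3_Dp; auto.
  - intros u p. apply (is_derive_Du 1). apply Ck3_Dp; auto.
  - intros u p Hu Hp. repeat split; [apply U1 | apply U2 | apply U3]; auto; lra.
Qed.

Lemma Phi_second_order_expansion eps : 0 < eps -> exists delta, 0 < delta /\
  forall e de, C1_on a b e de ->
    (forall x, a <= x <= b -> Rabs (e x) <= delta /\ Rabs (de x) <= delta) ->
    Rabs (Phi a b f (fun x => u0 x + e x) (fun x => du0 x + de x) - Phi a b f u0 du0
          - / 2 * second_variation a b f u0 du0 e de) <= eps * H1_norm2 a b e de.
Proof.
  intros Heps.
  destruct (second_order_remainder_le eps Heps) as [delta [Hdelta Hrem]].
  exists delta. split; auto.
  intros e de He Hsmall.
  destruct (Ck3_3_partials_cont f Hf) as [Cf [Cfp [Cfu [Cfpp [Cfpu [Cfup Cfuu]]]]]].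
  assert (Cu0 : cont_on a b u0) by (eapply C1_on_cont_on; eauto).
  assert (Cdu0 : cont_on a b du0) by apply Hu0.
  assert (Ce : cont_on a b e) by (eapply C1_on_cont_on; eauto).
  assert (Cde : cont_on a b de) by apply He.
  set (rem := fun x => second_order_remainder f u0 du0 x (e x) (de x)).
  assert (Crem : cont_on a b rem).
  { unfold rem, second_order_remainder. apply cont_on_minus; [lra | solve_cont_on |].
    apply cont_on_mult; [lra | solve_cont_on | apply cont_on_second_var_integrand; auto]. }
  assert (Hsplit : Phi a b f (fun x => u0 x + e x) (fun x => du0 x + de x) - Phi a b f u0 du0
          - / 2 * second_variation a b f u0 du0 e de
        = RInt rem a b + RInt (fun x => along (fu f) u0 du0 x * e x
                                        + along (fp f) u0 du0 x * de x) a b).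
  { unfold Phi, second_variation, along.
    rewrite <- RInt_plus_on, <- RInt_minus_on, <- RInt_scal_on, <- RInt_minus_on;
      try lra; try solve_cont_on; try (apply cont_on_second_var_integrand; auto).
    apply RInt_ext_on; [lra|]. intros x Hx. unfold rem, second_order_remainder, along. ring. }
  rewrite Hsplit, (first_variation_zero e de He), Rplus_0_r.
  eapply Rle_trans.
  { apply (RInt_abs_le_on a b rem (fun x => eps * (e x ^ 2 + de x ^ 2))); auto; try lra.
    - solve_cont_on.
    - intros x Hx. destruct (Hsmall x Hx). apply Hrem; auto. }
  rewrite RInt_scal_on; [| lra | solve_cont_on]. fold (H1_norm2 a b e de). lra.
Qed.

(* Necessity of [Q >= 0]: along [u0 + t e] the increment of [Phi] is
   [t^2 (Q e / 2 + o(1))]. *)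
Lemma weak_minimizer_second_variation_ge0 : weak_minimizer a b f u0 du0 ->
  forall e de, C1_on a b e de -> 0 <= second_variation a b f u0 du0 e de.
Proof.
  intros [eps0 [Heps0 Hwm]] e de He.
  assert (Ce : cont_on a b e) by (eapply C1_on_cont_on; eauto).
  assert (Cde : cont_on a b de) by apply He.
  destruct (Rle_lt_dec 0 (second_variation a b f u0 du0 e de)) as [ok|Hneg]; auto. exfalso.
  set (Q := second_variation a b f u0 du0 e de) in *.
  set (N := H1_norm2 a b e de).
  assert (HN : 0 <= N) by (apply H1_norm2_ge0; auto; lra).
  set (eps := - Q / (4 * (N + 1))).
  assert (HepsN : eps * N <= - Q / 4).
  { unfold eps. apply Rmult_le_reg_r with (4 * (N + 1)); [lra|].
    replace (- Q / (4 * (N + 1)) * N * (4 * (N + 1))) with (- Q * N) by (field; lra).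
    replace (- Q / 4 * (4 * (N + 1))) with (- Q * N - Q) by field. lra. }
  destruct (Phi_second_order_expansion eps ltac:(unfold eps; apply Rdiv_lt_0_compat; lra))
    as [dl [Hdl Hexp]].
  destruct (cont_on_bounded a b e ltac:(lra) Ce) as [Me [HMe BMe]].
  destruct (cont_on_bounded a b de ltac:(lra) Cde) as [Md [HMd BMd]].
  (* [t e] is within [dl] of 0 in sup norm and within [eps0] of 0 in C^1 norm *)
  set (t := Rmin dl (eps0 / 4) / (Me + Md)).
  assert (Ht : 0 < t) by (apply Rdiv_lt_0_compat; [apply Rmin_pos |]; lra).
  assert (HtM : t * (Me + Md) = Rmin dl (eps0 / 4)) by (unfold t; field; lra).
  assert (Hm := Rmin_l dl (eps0 / 4)). assert (Hm' := Rmin_r dl (eps0 / 4)).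
  assert (Hsmall : forall x, a <= x <= b ->
                   Rabs (t * e x) <= t * Me /\ Rabs (t * de x) <= t * Md).
  { intros x Hx. rewrite !Rabs_mult, (Rabs_pos_eq t) by lra.
    split; apply Rmult_le_compat_l; auto; lra. }
  assert (Hte : C1_on a b (fun x => t * e x) (fun x => t * de x))
    by (apply C1_on_scal; auto; lra).
  assert (Hmin : Phi a b f u0 du0
                 <= Phi a b f (fun x => u0 x + t * e x) (fun x => du0 x + t * de x)).
  { apply Hwm; [apply C1_on_plus; auto; lra|].
    exists (t * Me), (t * Md). split; [nra|].
    intros x Hx. replace (u0 x + t * e x - u0 x) with (t * e x) by ring.
    replace (du0 x + t * de x - du0 x) with (t * de x) by ring. auto. }
  assert (Hclose := Hexp _ _ Hte ltac:(intros x Hx; destruct (Hsmall x Hx); split; nra)).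
  rewrite second_variation_scal, H1_norm2_scal in Hclose; auto; try lra.
  fold Q N in Hclose. apply Rabs_le_between in Hclose.
  assert (0 < t ^ 2) by (apply pow_lt; lra).
  assert (t ^ 2 * (eps * N) <= t ^ 2 * (- Q / 4)) by (apply Rmult_le_compat_l; lra).
  nra.
Qed.

End SecondVariation.

(** * Jacobi fields *)

(* Gronwall: [E e^{-K (x - z)}] is nonincreasing right of [z] and
   [E e^{K (x - z)}] nondecreasing left of it. *)
Lemma gronwall_zero c d E dE K z : C1_on c d E dE ->
  (forall x, c <= x <= d -> 0 <= E x) ->
  (forall x, c <= x <= d -> Rabs (dE x) <= K * E x) ->
  c <= z <= d -> E z = 0 -> forall x, c <= x <= d -> E x = 0.
Proof.
  intros HE HE0 HK Hz HEz x Hx.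
  assert (HEx := HE0 x Hx).
  destruct (Rle_lt_dec z x) as [Hzx|Hxz].
  - set (g := fun t => dE t * exp (- K * (t - z)) + E t * (- K * exp (- K * (t - z)))).
    assert (HF : C1_on z x (fun t => E t * exp (- K * (t - z))) g).
    { apply C1_on_mult; [lra | eapply C1_on_subset; eauto; lra | apply C1_on_exp]. }
    assert (I1 := RInt_C1_on z x _ _ Hzx HF).
    assert (I2 : RInt g z x <= 0).
    { apply RInt_le0_on; [lra | apply HF |]. intros t Ht.
      assert (Rabs (dE t) <= K * E t) by (apply HK; lra).
      assert (0 < exp (- K * (t - z))) by apply exp_pos.
      apply Rabs_le_between in H. unfold g. nra. }
    cbv beta in I1. rewrite HEz, Rminus_diag, Rmult_0_r, exp_0 in I1.
    assert (0 < exp (- K * (x - z))) by apply exp_pos.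
    nra.
  - set (g := fun t => dE t * exp (K * (t - z)) + E t * (K * exp (K * (t - z)))).
    assert (HF : C1_on x z (fun t => E t * exp (K * (t - z))) g).
    { apply C1_on_mult; [lra | eapply C1_on_subset; eauto; lra | apply C1_on_exp]. }
    assert (I1 := RInt_C1_on x z _ _ ltac:(lra) HF).
    assert (I2 : 0 <= RInt g x z).
    { apply RInt_ge0_on; [lra | apply HF |]. intros t Ht.
      assert (Rabs (dE t) <= K * E t) by (apply HK; lra).
      assert (0 < exp (K * (t - z))) by apply exp_pos.
      apply Rabs_le_between in H. unfold g. nra. }
    cbv beta in I1. rewrite HEz, Rminus_diag, Rmult_0_r, exp_0 in I1.
    assert (0 < exp (K * (x - z))) by apply exp_pos.
    nra.
Qed.

(* The derivative of the energy [h^2 + (B h)^2] of a Jacobi field, with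
   [B h = p h' + q h] and [(B h)' = r h' + s h]; the ellipticity [c0 <= p]
   controls [h'] by [B h] and [h]. *)
Lemma jacobi_energy_deriv_le c0 P p q r s hv dv : 0 < c0 -> 0 <= P -> c0 <= p ->
  Rabs q <= P -> Rabs r <= P -> Rabs s <= P ->
  Rabs (2 * (hv * dv) + 2 * ((p * dv + q * hv) * (r * dv + s * hv)))
  <= ((1 + 2 * P + P * P + P * c0) / c0 + 1) * (hv ^ 2 + (p * dv + q * hv) ^ 2).
Proof.
  intros Hc0 HP Hp Hq Hr Hs.
  set (Bv := p * dv + q * hv). set (Cv := r * dv + s * hv).
  set (X := Rabs hv). set (Y := Rabs Bv). set (D := Rabs dv).
  assert (0 <= X) by apply Rabs_pos. assert (0 <= Y) by apply Rabs_pos.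
  assert (0 <= D) by apply Rabs_pos. assert (0 <= Rabs Cv) by apply Rabs_pos.
  assert (HD : c0 * D <= Y + P * X).
  { assert (c0 * D <= p * D) by (apply Rmult_le_compat_r; lra).
    assert (E : p * D = Rabs (Bv - q * hv)).
    { unfold D. rewrite <- (Rabs_pos_eq p) at 1 by lra.
      rewrite <- Rabs_mult. f_equal. unfold Bv; ring. }
    assert (Rabs (Bv - q * hv) <= Y + P * X).
    { eapply Rle_trans; [apply Rabs_triang|]. rewrite Rabs_Ropp, Rabs_mult.
      apply Rplus_le_compat_l. apply Rmult_le_compat_r; auto. }
    lra. }
  assert (HC : Rabs Cv <= P * D + P * X).
  { unfold Cv. eapply Rle_trans; [apply Rabs_triang|]. rewrite !Rabs_mult.
    apply Rplus_le_compat; apply Rmult_le_compat_r; auto. }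
  assert (E1 : hv ^ 2 + Bv ^ 2 = X * X + Y * Y).
  { unfold X, Y. rewrite <- !Rabs_mult, (Rabs_pos_eq (hv * hv)), (Rabs_pos_eq (Bv * Bv));
      nra. }
  rewrite E1.
  eapply Rle_trans; [apply Rabs_triang|]. rewrite !Rabs_mult, Rabs_pos_eq by lra.
  fold X D Y.
  clearbody X Y D Cv.
  assert (Hxy : 2 * X * Y <= X * X + Y * Y)
    by (pose proof (Rle_0_sqr (X - Y)); unfold Rsqr in *; lra).
  assert (c0 * (2 * (X * D) + 2 * (Y * Rabs Cv))
          <= (1 + 2 * P + P * P + P * c0) * (X * X + Y * Y)).
  { assert (h1 := Rmult_le_compat_l (c0 * Y) _ _ ltac:(nra) HC).
    assert (h2 := Rmult_le_compat_l (P * Y) _ _ ltac:(nra) HD).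
    assert (h3 := Rmult_le_compat_l X _ _ ltac:(lra) HD).
    assert (h4 := Rmult_le_compat_l (1 + P * P + c0 * P) _ _ ltac:(nra) Hxy).
    lra. }
  apply Rmult_le_reg_l with c0; auto.
  replace (c0 * (((1 + 2 * P + P * P + P * c0) / c0 + 1) * (X * X + Y * Y)))
    with ((1 + 2 * P + P * P + P * c0) * (X * X + Y * Y) + c0 * (X * X + Y * Y))
    by (field; lra).
  nra.
Qed.

Lemma C1_on_sq_le_integral c d q dq lam : c <= d -> 0 < lam -> C1_on c d q dq ->
  forall x, c <= x <= d ->
  q x ^ 2 <= q d ^ 2 + RInt (fun t => lam * q t ^ 2 + / lam * dq t ^ 2) c d.
Proof.
  intros Hcd Hlam Hq x Hx.
  assert (Cq : cont_on c d q) by (eapply C1_on_cont_on; eauto).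
  assert (Cdq : cont_on c d dq) by apply Hq.
  set (P := fun t => lam * q t ^ 2 + / lam * dq t ^ 2).
  assert (CP : cont_on c d P) by (unfold P; solve_cont_on).
  assert (Hq2 : C1_on x d (fun t => q t * q t) (fun t => dq t * q t + q t * dq t)).
  { apply C1_on_mult; [lra | |]; eapply C1_on_subset; eauto; lra. }
  assert (F1 := RInt_C1_on x d _ _ ltac:(lra) Hq2).
  (* [-2 q q' <= lam q^2 + q'^2 / lam] *)
  assert (F2 : RInt (fun t => -1 * (dq t * q t + q t * dq t)) x d <= RInt P x d).
  { apply RInt_le_on; [lra | apply cont_on_mult; [lra | apply cont_on_const | apply Hq2]
                      | eapply cont_on_subset; eauto; lra |].
    intros t Ht. unfold P.
    assert (0 <= (lam * q t + dq t) ^ 2 / lam)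
      by (apply Rmult_le_pos; [apply pow2_ge_0 | apply Rlt_le, Rinv_0_lt_compat; lra]).
    replace ((lam * q t + dq t) ^ 2 / lam)
      with (lam * q t ^ 2 + / lam * dq t ^ 2 + 2 * (q t * dq t)) in H by (field; lra).
    lra. }
  rewrite RInt_scal_on in F2; [| lra | apply Hq2].
  assert (F3 : RInt P x d <= RInt P c d).
  { rewrite <- (RInt_Chasles_on c x d P); try lra; auto.
    assert (0 <= RInt P c x); [|lra].
    apply RInt_ge0_on; [lra | eapply cont_on_subset; eauto; lra |].
    intros t Ht. unfold P.
    assert (0 <= / lam) by (apply Rlt_le, Rinv_0_lt_compat; lra).
    apply Rplus_le_le_0_compat; apply Rmult_le_pos; try lra; apply pow2_ge_0. }
  simpl in F1. fold P. lra.
Qed.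

(* Integrating [C1_on_sq_le_integral] with [lam = 1 / (2 (d - c))] absorbs
   the term [lam * RInt q^2]. *)
Lemma C1_on_sq_le c d q dq : c < d -> C1_on c d q dq ->
  forall x, c <= x <= d -> q x ^ 2 <= 2 * q d ^ 2 + 4 * (d - c) * RInt (fun t => dq t ^ 2) c d.
Proof.
  intros Hcd Hq.
  assert (Cq : cont_on c d q) by (eapply C1_on_cont_on; eauto).
  assert (Cdq : cont_on c d dq) by apply Hq.
  set (lam := / (2 * (d - c))).
  assert (Hlam : 0 < lam) by (unfold lam; apply Rinv_0_lt_compat; lra).
  set (S := RInt (fun t => q t ^ 2) c d). set (D := RInt (fun t => dq t ^ 2) c d).
  assert (HP : RInt (fun t => lam * q t ^ 2 + / lam * dq t ^ 2) c d = lam * S + / lam * D).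
  { rewrite RInt_plus_on, !RInt_scal_on; try reflexivity; try lra; solve_cont_on. }
  assert (Hpt : forall x, c <= x <= d -> q x ^ 2 <= q d ^ 2 + (lam * S + / lam * D)).
  { intros x Hx. rewrite <- HP. apply C1_on_sq_le_integral; auto; lra. }
  assert (HS : S <= (d - c) * (q d ^ 2 + (lam * S + / lam * D))).
  { unfold S at 1. rewrite <- RInt_const_on. apply RInt_le_on; [lra | solve_cont_on | |].
    - apply cont_on_const.
    - exact Hpt. }
  assert (Hinv : / lam = 2 * (d - c)) by (unfold lam; field; lra).
  assert (Hl : (d - c) * lam = / 2) by (unfold lam; field; lra).
  assert (HS2 : lam * S <= q d ^ 2 + / lam * D).
  { assert (H := Rmult_le_compat_l lam _ _ (Rlt_le _ _ Hlam) HS).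
    replace (lam * ((d - c) * (q d ^ 2 + (lam * S + / lam * D))))
      with ((d - c) * lam * (q d ^ 2 + (lam * S + / lam * D))) in H by ring.
    rewrite Hl in H. lra. }
  intros x Hx. specialize (Hpt x Hx). rewrite Hinv in Hpt, HS2. lra.
Qed.

(* [h (e / h)'], the quantity whose square appears in Picone's identity. *)
Definition picone_deriv (h dh e de : R -> R) (x : R) : R := de x - dh x / h x * e x.

Section NonvanishingWeight.

Variables (a b : R) (h dh : R -> R).
Hypotheses (Hab : a < b) (Hh : C1_on a b h dh) (Hnz : forall x, a <= x <= b -> h x <> 0).

Lemma cont_on_picone_deriv e de : cont_on a b e -> cont_on a b de ->
  cont_on a b (picone_deriv h dh e de).
Proof.
  intros Ce Cde. assert (cont_on a b h) by (eapply C1_on_cont_on; eauto).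
  assert (cont_on a b dh) by apply Hh.
  assert (cont_on a b (fun x => / h x)) by (apply cont_on_inv; auto; lra).
  unfold picone_deriv, Rdiv. solve_cont_on.
Qed.

Lemma picone_sup_bound : exists K1, 0 < K1 /\ forall e de, C1_on a b e de ->
  forall x, a <= x <= b ->
  e x ^ 2 <= K1 * (e b ^ 2 + RInt (fun t => picone_deriv h dh e de t ^ 2) a b).
Proof.
  assert (Ch : cont_on a b h) by (eapply C1_on_cont_on; eauto).
  destruct (cont_on_abs_bounded_below a b h ltac:(lra) Ch Hnz) as [m [Hm Bm]].
  destruct (cont_on_bounded a b h ltac:(lra) Ch) as [Mh [HMh BMh]].
  exists (Mh ^ 2 * (2 + 4 * (b - a)) / m ^ 2). split.
  { apply Rdiv_lt_0_compat; [apply Rmult_lt_0_compat; [nra | lra] | nra]. }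
  intros e de He x Hx.
  assert (Ce : cont_on a b e) by (eapply C1_on_cont_on; eauto).
  assert (Cz := cont_on_picone_deriv e de Ce (proj2 He)).
  set (zeta := picone_deriv h dh e de) in *.
  set (Z := RInt (fun t => zeta t ^ 2) a b).
  assert (Hm2 : 0 < m ^ 2) by nra.
  assert (Hsq_div : forall t y, a <= t <= b -> (y / h t) ^ 2 <= y ^ 2 / m ^ 2).
  { intros t y Ht. specialize (Bm t Ht). specialize (Hnz t Ht).
    replace ((y / h t) ^ 2) with (y ^ 2 / Rabs (h t) ^ 2) by (rewrite pow2_abs; field; auto).
    apply Rmult_le_compat_l; [nra | apply Rinv_le_contravar; nra]. }
  assert (Hq : C1_on a b (fun t => e t / h t) (fun t => zeta t / h t)).
  { eapply C1_on_ext;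
      [apply C1_on_mult; [lra | apply He | apply C1_on_inv; [lra | exact Hh | exact Hnz]] | |];
      intros t Ht; unfold zeta, picone_deriv; [reflexivity | field; auto]. }
  assert (Hqx := C1_on_sq_le a b _ _ Hab Hq x Hx).
  assert (HD : RInt (fun t => (zeta t / h t) ^ 2) a b <= Z / m ^ 2).
  { apply Rle_trans with (RInt (fun t => / m ^ 2 * zeta t ^ 2) a b).
    - apply RInt_le_on; [lra | apply cont_on_pow; [lra | apply Hq] | solve_cont_on |].
      intros t Ht. rewrite Rmult_comm. apply Hsq_div; auto.
    - rewrite RInt_scal_on; [| lra | solve_cont_on]. right. unfold Z, Rdiv. ring. }
  assert (Hqb := Hsq_div b (e b) ltac:(lra)).
  assert (HZ : 0 <= Z) by (apply RInt_ge0_on; [lra | solve_cont_on | intros; nra]).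
  replace (e x ^ 2) with (h x ^ 2 * (e x / h x) ^ 2) by (field; apply Hnz; auto).
  assert (h x ^ 2 <= Mh ^ 2).
  { rewrite <- (pow2_abs (h x)). apply pow_incr. split; [apply Rabs_pos | auto]. }
  apply Rle_trans with (Mh ^ 2 * (2 * (e b ^ 2 / m ^ 2) + 4 * (b - a) * (Z / m ^ 2))).
  - apply Rmult_le_compat; [nra | nra | auto |].
    assert (0 <= 4 * (b - a)) by lra. nra.
  - assert (E : Mh ^ 2 * (2 + 4 * (b - a)) / m ^ 2 * (e b ^ 2 + Z)
                 - Mh ^ 2 * (2 * (e b ^ 2 / m ^ 2) + 4 * (b - a) * (Z / m ^ 2))
                 = Mh ^ 2 / m ^ 2 * (2 * Z + 4 * (b - a) * e b ^ 2)) by (field; lra).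
    assert (0 <= Mh ^ 2 / m ^ 2)
      by (unfold Rdiv; apply Rmult_le_pos; [nra | apply Rlt_le, Rinv_0_lt_compat; lra]).
    assert (0 <= 2 * Z + 4 * (b - a) * e b ^ 2) by nra.
    assert (0 <= Mh ^ 2 / m ^ 2 * (2 * Z + 4 * (b - a) * e b ^ 2)) by (apply Rmult_le_pos; auto).
    lra.
Qed.

Lemma picone_H1_bound : exists K2, 0 < K2 /\ forall e de, C1_on a b e de ->
  H1_norm2 a b e de <= K2 * (e b ^ 2 + RInt (fun t => picone_deriv h dh e de t ^ 2) a b).
Proof.
  destruct picone_sup_bound as [K1 [HK1 Hsup]].
  assert (Ch : cont_on a b h) by (eapply C1_on_cont_on; eauto).
  assert (Cdh : cont_on a b dh) by apply Hh.
  assert (cont_on a b (fun x => / h x)) by (apply cont_on_inv; auto; lra).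
  destruct (cont_on_bounded a b (fun x => dh x / h x) ltac:(lra) ltac:(solve_cont_on))
    as [Rr [HRr BRr]].
  exists ((b - a) * (1 + 2 * Rr ^ 2) * K1 + 2). split.
  { assert (0 < (b - a) * (1 + 2 * Rr ^ 2) * K1) by (apply Rmult_lt_0_compat; nra). lra. }
  intros e de He.
  assert (Ce : cont_on a b e) by (eapply C1_on_cont_on; eauto).
  assert (Cde : cont_on a b de) by apply He.
  assert (Cz := cont_on_picone_deriv e de Ce Cde).
  specialize (Hsup e de He).
  set (zeta := picone_deriv h dh e de) in *.
  set (Z := RInt (fun t => zeta t ^ 2) a b) in *.
  set (T := e b ^ 2 + Z) in *.
  unfold H1_norm2.
  apply Rle_trans with (RInt (fun x => (1 + 2 * Rr ^ 2) * (K1 * T) + 2 * zeta x ^ 2) a b).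
  { apply RInt_le_on; [lra | solve_cont_on | solve_cont_on |]. intros x Hx.
    specialize (Hsup x Hx). specialize (BRr x Hx).
    assert (Ed : de x = zeta x + dh x / h x * e x) by (unfold zeta, picone_deriv; ring).
    rewrite Ed. set (r := dh x / h x) in *.
    assert (r ^ 2 <= Rr ^ 2)
      by (rewrite <- (pow2_abs r); apply pow_incr; split; [apply Rabs_pos | auto]).
    assert (0 <= e x ^ 2) by nra.
    assert (r ^ 2 * e x ^ 2 <= Rr ^ 2 * (K1 * T)).
    { apply Rle_trans with (Rr ^ 2 * e x ^ 2); [apply Rmult_le_compat_r; auto|].
      apply Rmult_le_compat_l; auto. nra. }
    assert (0 <= (zeta x - r * e x) ^ 2) by apply pow2_ge_0.
    nra. }
  rewrite RInt_plus_on, RInt_const_on, RInt_scal_on; [| lra | solve_cont_on | lra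
    | solve_cont_on | solve_cont_on].
  fold Z. unfold T. assert (0 <= e b ^ 2) by apply pow2_ge_0. nra.
Qed.

End NonvanishingWeight.

(** * A cutoff near a conjugate point *)

Definition smoothstep (t : R) : R := 1 - 3 * t ^ 2 + 2 * t ^ 3.
Definition dsmoothstep (t : R) : R := - 6 * t + 6 * t ^ 2.

Lemma C1_on_smoothstep : C1_on 0 1 smoothstep dsmoothstep.
Proof.
  apply C1_on_of_is_derive.
  - intros t. unfold smoothstep, dsmoothstep. auto_derive; [exact I|].
    ring_R.
  - intros t. apply (@ex_derive_continuous R_AbsRing R_NormedModule).
    unfold dsmoothstep. auto_derive. exact I.
Qed.

(* [dsmoothstep] vanishes at 0 and 1, so the tangent extension is constant
   outside [0, 1]. *)
Definition cutoff (y dl x : R) : R :=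
  tangent_ext 0 1 smoothstep dsmoothstep ((x - (y - dl)) / dl).
Definition dcutoff (y dl x : R) : R := dsmoothstep (clamp 0 1 ((x - (y - dl)) / dl)) / dl.

Lemma C1_on_cutoff c d y dl : 0 < dl -> C1_on c d (cutoff y dl) (dcutoff y dl).
Proof.
  intros Hdl. apply C1_on_of_is_derive.
  - intros t. unfold cutoff, dcutoff.
    assert (D : is_derive (fun x => (x - (y - dl)) / dl) t (/ dl)).
    { auto_derive; [exact I | ring_R]. }
    pose proof (is_derive_comp _ _ t _ _
                  (is_derive_tangent_ext 0 1 _ _ ltac:(lra) C1_on_smoothstep _) D) as D'.
    unfold scal in D'; simpl in D'; unfold mult in D'; simpl in D'.
    rewrite Rmult_comm in D'. exact D'.
  - intros t. unfold dcutoff.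
    apply (continuous_mult (fun t => dsmoothstep (clamp 0 1 ((t - (y - dl)) / dl)))
                           (fun _ => / dl)); [| apply continuous_const].
    apply (continuous_comp (fun t => (t - (y - dl)) / dl) (fun t => dsmoothstep (clamp 0 1 t))).
    + apply (@ex_derive_continuous R_AbsRing R_NormedModule). auto_derive. exact I.
    + apply cont_on_clampP; [lra | apply C1_on_smoothstep].
Qed.

Lemma cutoff_left y dl x : 0 < dl -> x <= y - dl -> cutoff y dl x = 1 /\ dcutoff y dl x = 0.
Proof.
  intros Hdl Hx. unfold cutoff, dcutoff, tangent_ext.
  assert ((x - (y - dl)) / dl <= 0).
  { unfold Rdiv. rewrite <- (Rmult_0_l (/ dl)).
    apply Rmult_le_compat_r; [apply Rlt_le, Rinv_0_lt_compat |]; lra. }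
  replace (clamp 0 1 ((x - (y - dl)) / dl)) with 0
    by (unfold clamp, Rmax, Rmin; repeat destruct Rle_dec; lra).
  unfold smoothstep, dsmoothstep. split; field; lra.
Qed.

Lemma cutoff_right y dl x : 0 < dl -> y <= x -> cutoff y dl x = 0 /\ dcutoff y dl x = 0.
Proof.
  intros Hdl Hx. unfold cutoff, dcutoff, tangent_ext.
  assert (1 <= (x - (y - dl)) / dl).
  { unfold Rdiv. rewrite <- (Rinv_r dl) by lra.
    apply Rmult_le_compat_r; [apply Rlt_le, Rinv_0_lt_compat |]; lra. }
  replace (clamp 0 1 ((x - (y - dl)) / dl)) with 1
    by (unfold clamp, Rmax, Rmin; repeat destruct Rle_dec; lra).
  unfold smoothstep, dsmoothstep. split; field; lra.
Qed.

Lemma cutoff_bounds y dl x : 0 < dl ->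
  Rabs (cutoff y dl x) <= 1 /\ Rabs (dcutoff y dl x) <= 2 / dl.
Proof.
  intros Hdl. unfold cutoff, dcutoff, tangent_ext.
  set (t := (x - (y - dl)) / dl).
  assert (Hc := clamp_in 0 1 t ltac:(lra)).
  set (ct := clamp 0 1 t) in *.
  split.
  - destruct (Rle_dec t 0) as [T0|T0]; [|destruct (Rle_dec 1 t) as [T1|T1]].
    + replace ct with 0 by (unfold ct, clamp, Rmax, Rmin; repeat destruct Rle_dec; lra).
      unfold smoothstep, dsmoothstep. apply Rabs_le. split; ring_simplify; lra.
    + replace ct with 1 by (unfold ct, clamp, Rmax, Rmin; repeat destruct Rle_dec; lra).
      unfold smoothstep, dsmoothstep. apply Rabs_le. split; ring_simplify; lra.
    + replace ct with t by (unfold ct; rewrite clamp_id; lra).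
      rewrite Rminus_diag, Rmult_0_l, Rplus_0_r. unfold smoothstep.
      apply Rabs_le. split; nra.
  - unfold Rdiv. rewrite Rabs_mult, Rabs_inv, (Rabs_pos_eq dl) by lra.
    apply Rmult_le_compat_r; [apply Rlt_le, Rinv_0_lt_compat; lra |].
    unfold dsmoothstep. apply Rabs_le. destruct Hc. split; nra.
Qed.

Definition cutoff_test (h : R -> R) (y dl s x : R) : R := h x * cutoff y dl x + s.
Definition dcutoff_test (h dh : R -> R) (y dl x : R) : R :=
  dh x * cutoff y dl x + h x * dcutoff y dl x.

Lemma quad_form_abs_le p q r u du P Q Rr Mu Md :
  Rabs p <= P -> Rabs q <= Q -> Rabs r <= Rr -> Rabs u <= Mu -> Rabs du <= Md ->
  Rabs (r * u ^ 2 + 2 * q * u * du + p * du ^ 2) <= Rr * Mu ^ 2 + 2 * Q * Mu * Md + P * Md ^ 2.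
Proof.
  intros Hp Hq Hr Hu Hdu.
  pose proof (Rabs_pos p); pose proof (Rabs_pos q); pose proof (Rabs_pos r).
  pose proof (Rabs_pos u); pose proof (Rabs_pos du).
  assert (A1 : Rabs (r * u ^ 2) <= Rr * Mu ^ 2).
  { rewrite Rabs_mult, <- RPow_abs.
    apply Rmult_le_compat; auto; [apply pow_le; lra | apply pow_incr; lra]. }
  assert (A2 : Rabs (2 * q * u * du) <= 2 * Q * Mu * Md).
  { rewrite !Rabs_mult, Rabs_pos_eq by lra.
    repeat apply Rmult_le_compat; try lra; repeat apply Rmult_le_pos; lra. }
  assert (A3 : Rabs (p * du ^ 2) <= P * Md ^ 2).
  { rewrite Rabs_mult, <- RPow_abs.
    apply Rmult_le_compat; auto; [apply pow_le; lra | apply pow_incr; lra]. }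
  eapply Rle_trans; [apply Rabs_triang|].
  eapply Rle_trans; [apply Rplus_le_compat_r, Rabs_triang|].
  lra.
Qed.

Section JacobiField.

Variables (a b : R) (f : R -> R -> R -> R) (u0 du0 h dh : R -> R) (c0 : R).
Hypotheses (Hab : a < b) (Hf : Ck3 3 f) (Hu0 : C1_on a b u0 du0) (Hh : C1_on a b h dh).
Hypothesis Hjacobi : forall x, a <= x <= b ->
  deriv_within a b (Bop f u0 du0 h dh) x (Cop f u0 du0 h dh x).
Hypotheses (Hc0 : 0 < c0) (Hpp : forall x, a <= x <= b -> c0 <= along (fpp f) u0 du0 x).

Lemma Bop_C1_on : C1_on a b (Bop f u0 du0 h dh) (Cop f u0 du0 h dh).
Proof.
  split; auto.
  destruct (cont_on_coefficients a b f u0 du0 Hf Hu0) as [_ [_ [_ [? ?]]]].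
  assert (cont_on a b h) by (eapply C1_on_cont_on; eauto).
  destruct Hh. unfold Cop. solve_cont_on.
Qed.

(* The energy [h^2 + (B h)^2] vanishes at [z], and Gronwall propagates this. *)
Lemma jacobi_unique z : a <= z <= b -> h z = 0 -> Bop f u0 du0 h dh z = 0 ->
  forall x, a <= x <= b -> h x = 0.
Proof.
  intros Hz Hhz HBz.
  destruct (cont_on_coefficients a b f u0 du0 Hf Hu0) as [_ [_ [Cpu [Cup Cuu]]]].
  destruct (cont_on_bounded a b _ ltac:(lra) Cpu) as [P1 [HP1 B1]].
  destruct (cont_on_bounded a b _ ltac:(lra) Cup) as [P2 [HP2 B2]].
  destruct (cont_on_bounded a b _ ltac:(lra) Cuu) as [P3 [HP3 B3]].
  set (B := Bop f u0 du0 h dh) in *. set (C := Cop f u0 du0 h dh) in *.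
  set (P := P1 + P2 + P3).
  assert (HE : C1_on a b (fun x => h x * h x + B x * B x)
                 (fun x => (dh x * h x + h x * dh x) + (C x * B x + B x * C x)))
    by (apply C1_on_plus; [lra | |]; apply C1_on_mult; auto; try lra; apply Bop_C1_on).
  assert (HE0 : forall x, a <= x <= b -> h x * h x + B x * B x = 0).
  { apply (gronwall_zero _ _ _ _ ((1 + 2 * P + P * P + P * c0) / c0 + 1) z HE); auto.
    - intros; nra.
    - intros x Hx.
      replace (dh x * h x + h x * dh x + (C x * B x + B x * C x))
        with (2 * (h x * dh x) + 2 * (B x * C x)) by ring.
      replace (h x * h x + B x * B x) with (h x ^ 2 + B x ^ 2) by ring.
      unfold B, C, Bop, Cop.
      apply jacobi_energy_deriv_le; auto; unfold P;
        [lra | specialize (B1 x Hx) | specialize (B2 x Hx) | specialize (B3 x Hx)]; lra.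
    - rewrite Hhz, HBz. ring. }
  intros x Hx. specialize (HE0 x Hx). nra.
Qed.

(* Integration by parts against the Jacobi equation: with [B h' = C h] and
   [f_pu = f_up], the integrand of the second variation at [h + s] is
   [((h + 2 s) B h)' + s^2 f_uu]. *)
Lemma second_variation_shift c d s : a <= c -> c <= d -> d <= b ->
  RInt (fun x => second_var_integrand f u0 du0 x (h x + s) (dh x)) c d
  = (h d + 2 * s) * Bop f u0 du0 h dh d - (h c + 2 * s) * Bop f u0 du0 h dh c
    + s ^ 2 * RInt (along (fuu f) u0 du0) c d :> R.
Proof.
  intros Hac Hcd Hdb.
  destruct (cont_on_coefficients a b f u0 du0 Hf Hu0) as [_ [_ [_ [_ Cuu]]]].
  assert (HG : C1_on c d (fun x => (h x + 2 * s) * Bop f u0 du0 h dh x)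
                 (fun x => (dh x + 0) * Bop f u0 du0 h dh x + (h x + 2 * s) * Cop f u0 du0 h dh x)).
  { apply C1_on_mult; [lra | apply C1_on_plus; [lra | | apply C1_on_const] |];
      eapply C1_on_subset; eauto; apply Bop_C1_on. }
  rewrite <- (RInt_C1_on c d _ _ Hcd HG), <- RInt_scal_on, <- RInt_plus_on; auto.
  - apply RInt_ext_on; auto. intros x Hx.
    unfold second_var_integrand, Bop, Cop.
    unfold along. rewrite (fpu_fup f x) by auto. ring.
  - apply HG.
  - apply cont_on_mult; [auto | apply cont_on_const | eapply cont_on_subset; eauto].
  - eapply cont_on_subset; eauto.
Qed.

Lemma jacobi_second_variation :
  second_variation a b f u0 du0 h dh
  = h b * Bop f u0 du0 h dh b - h a * Bop f u0 du0 h dh a.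
Proof.
  unfold second_variation.
  rewrite (RInt_ext_on a b _ (fun x => second_var_integrand f u0 du0 x (h x + 0) (dh x)));
    [| lra | intros; rewrite Rplus_0_r; reflexivity].
  rewrite second_variation_shift by lra. ring.
Qed.

(* Picone's identity: with [w = B h / h], the integrand equals
   [f_pp (h (e / h)')^2 + (w e^2)']. *)
Lemma second_variation_picone e de : (forall x, a <= x <= b -> h x <> 0) ->
  C1_on a b e de ->
  second_variation a b f u0 du0 e de
  = RInt (fun x => along (fpp f) u0 du0 x * picone_deriv h dh e de x ^ 2) a b
    + Bop f u0 du0 h dh b / h b * e b ^ 2 - Bop f u0 du0 h dh a / h a * e a ^ 2 :> R.
Proof.
  intros Hnz He.
  destruct (cont_on_coefficients a b f u0 du0 Hf Hu0) as [_ [Cpp _]].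
  assert (Ce : cont_on a b e) by (eapply C1_on_cont_on; eauto).
  assert (Cz := cont_on_picone_deriv a b h dh Hab Hh Hnz e de Ce (proj2 He)).
  set (B := Bop f u0 du0 h dh) in *. set (C := Cop f u0 du0 h dh) in *.
  assert (Hw : C1_on a b (fun x => B x * / h x)
                 (fun x => C x * / h x + B x * (- dh x / h x ^ 2)))
    by (apply C1_on_mult; [lra | apply Bop_C1_on | apply C1_on_inv; auto; lra]).
  assert (HG : C1_on a b (fun x => B x * / h x * (e x * e x))
     (fun x => (C x * / h x + B x * (- dh x / h x ^ 2)) * (e x * e x)
               + B x * / h x * (de x * e x + e x * de x)))
    by (apply C1_on_mult; [lra | auto | apply C1_on_mult; auto; lra]).
  unfold second_variation.
  rewrite (RInt_ext_on a b _ (fun x => along (fpp f) u0 du0 x * picone_deriv h dh e de x ^ 2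
     + ((C x * / h x + B x * (- dh x / h x ^ 2)) * (e x * e x)
        + B x * / h x * (de x * e x + e x * de x)))); [| lra |].
  - rewrite RInt_plus_on, (RInt_C1_on a b _ _ ltac:(lra) HG); [| lra | solve_cont_on | apply HG].
    unfold Rdiv. ring.
  - intros x Hx. unfold second_var_integrand, picone_deriv, B, C, Bop, Cop, along.
    rewrite (fpu_fup f x) by auto. field. auto.
Qed.

(* Picone's identity with [f_pp >= c0] and [w(b) = B h (b) / h b > 0]. *)
Lemma second_variation_coercive : (forall x, a <= x <= b -> h x <> 0) ->
  Bop f u0 du0 h dh a = 0 -> Bop f u0 du0 h dh b * h b > 0 ->
  exists mu, 0 < mu /\ forall e de, C1_on a b e de ->
  mu * (e b ^ 2 + RInt (fun x => picone_deriv h dh e de x ^ 2) a b)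
  <= second_variation a b f u0 du0 e de.
Proof.
  intros Hnz HBa HBb.
  destruct (cont_on_coefficients a b f u0 du0 Hf Hu0) as [_ [Cpp _]].
  set (wb := Bop f u0 du0 h dh b / h b).
  assert (Hwb : 0 < wb).
  { assert (h b <> 0) by (apply Hnz; lra).
    unfold wb. replace (Bop f u0 du0 h dh b / h b)
      with ((Bop f u0 du0 h dh b * h b) * / (h b) ^ 2) by (field; auto).
    apply Rmult_lt_0_compat; auto. apply Rinv_0_lt_compat, pow2_gt_0; auto. }
  exists (Rmin c0 wb). split; [apply Rmin_pos; lra|].
  intros e de He.
  assert (Ce : cont_on a b e) by (eapply C1_on_cont_on; eauto).
  assert (Cz := cont_on_picone_deriv a b h dh Hab Hh Hnz e de Ce (proj2 He)).
  rewrite second_variation_picone, HBa by auto. fold wb.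
  set (Z := RInt (fun x => picone_deriv h dh e de x ^ 2) a b).
  assert (HZ : 0 <= Z) by (apply RInt_ge0_on; [lra | solve_cont_on | intros; nra]).
  assert (c0 * Z <= RInt (fun x => along (fpp f) u0 du0 x * picone_deriv h dh e de x ^ 2) a b).
  { unfold Z. rewrite <- RInt_scal_on; [| lra | solve_cont_on].
    apply RInt_le_on; [lra | solve_cont_on | solve_cont_on |]. intros x Hx.
    apply Rmult_le_compat_r; [apply pow2_ge_0 | auto]. }
  assert (Rmin c0 wb * Z <= c0 * Z) by (apply Rmult_le_compat_r; [auto | apply Rmin_l]).
  assert (Rmin c0 wb * e b ^ 2 <= wb * e b ^ 2)
    by (apply Rmult_le_compat_r; [apply pow2_ge_0 | apply Rmin_r]).
  unfold Rdiv. lra.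
Qed.

Hypothesis Hextremal : forall x, a <= x <= b ->
  deriv_within a b (along (fp f) u0 du0) x (along (fu f) u0 du0 x).
Hypotheses (Hfp_a : along (fp f) u0 du0 a = 0) (Hfp_b : along (fp f) u0 du0 b = 0).

(* With [T e = e(b)^2 + RInt (h (e / h)')^2], coercivity and the expansion
   give [Phi (u0 + e) - Phi u0 >= mu T e / 4], and [T e = 0] forces [e = 0]. *)
Lemma jacobi_strict_weak_minimizer : (forall x, a <= x <= b -> h x <> 0) ->
  Bop f u0 du0 h dh a = 0 -> Bop f u0 du0 h dh b * h b > 0 ->
  strict_weak_minimizer a b f u0 du0.
Proof.
  intros Hnz HBa HBb.
  destruct (second_variation_coercive Hnz HBa HBb) as [mu [Hmu Hcoer]].
  destruct (picone_sup_bound a b h dh Hab Hh Hnz) as [K1 [HK1 Hsup]].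
  destruct (picone_H1_bound a b h dh Hab Hh Hnz) as [K2 [HK2 HN]].
  set (eps := mu / (4 * K2)).
  destruct (Phi_second_order_expansion a b f u0 du0 Hab Hf Hu0 Hextremal Hfp_a Hfp_b eps
              ltac:(unfold eps; apply Rdiv_lt_0_compat; lra)) as [dl [Hdl Hexp]].
  exists dl. split; auto.
  intros v dv Hv [M1 [M2 [HM HMb]]] [x0 [Hx0 Hvx0]].
  set (e := fun x => v x - u0 x). set (de := fun x => dv x - du0 x).
  assert (He : C1_on a b e de).
  { eapply C1_on_ext; [apply (C1_on_plus a b v dv (fun x => -1 * u0 x) (fun x => -1 * du0 x));
      [lra | auto | apply C1_on_scal; auto; lra] | |]; intros; unfold e, de; ring. }
  assert (Hsmall : forall x, a <= x <= b -> Rabs (e x) <= dl /\ Rabs (de x) <= dl).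
  { pose proof (HMb a ltac:(lra)) as [Ma1 Ma2].
    assert (0 <= M1) by (eapply Rle_trans; [apply Rabs_pos | eauto]).
    assert (0 <= M2) by (eapply Rle_trans; [apply Rabs_pos | eauto]).
    intros x Hx. destruct (HMb x Hx). unfold e, de. split; lra. }
  specialize (Hexp e de He Hsmall).
  replace (Phi a b f (fun x => u0 x + e x) (fun x => du0 x + de x)) with (Phi a b f v dv) in Hexp.
  2:{ unfold Phi. apply RInt_ext_on; [lra|]. intros x Hx. unfold e, de.
      replace (u0 x + (v x - u0 x)) with (v x) by ring.
      replace (du0 x + (dv x - du0 x)) with (dv x) by ring. reflexivity. }
  apply Rabs_le_between in Hexp.
  specialize (Hsup e de He). specialize (HN e de He). specialize (Hcoer e de He).
  set (T := e b ^ 2 + RInt (fun t => picone_deriv h dh e de t ^ 2) a b) in *.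
  assert (HT : 0 < T).
  { specialize (Hsup x0 Hx0).
    assert (0 < e x0 ^ 2) by (apply pow2_gt_0; unfold e; lra).
    nra. }
  assert (eps * H1_norm2 a b e de <= mu / 4 * T).
  { apply Rle_trans with (eps * (K2 * T)).
    - apply Rmult_le_compat_l; [unfold eps; apply Rlt_le, Rdiv_lt_0_compat; lra | exact HN].
    - right. unfold eps. field. lra. }
  assert (0 < mu / 4 * T) by (apply Rmult_lt_0_compat; lra).
  lra.
Qed.

Lemma C1_on_cutoff_test y dl s : 0 < dl ->
  C1_on a b (cutoff_test h y dl s) (dcutoff_test h dh y dl).
Proof.
  intros Hdl.
  apply (C1_on_ext a b (fun x => h x * cutoff y dl x + s)
           (fun x => (dh x * cutoff y dl x + h x * dcutoff y dl x) + 0));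
    [apply C1_on_plus; [lra | apply C1_on_mult; [lra | exact Hh | apply C1_on_cutoff; lra]
                       | apply C1_on_const] | |];
    intros; unfold cutoff_test, dcutoff_test; ring.
Qed.

Lemma jacobi_endpoint_shift_le y : a < y <= b -> h y = 0 ->
  exists K, 0 < K /\ forall s dl, Rabs s <= 1 -> 0 < dl -> dl <= y - a ->
  (h (y - dl) + 2 * s) * Bop f u0 du0 h dh (y - dl)
  <= 2 * s * Bop f u0 du0 h dh y + K * dl.
Proof.
  intros Hy Hhy.
  assert (HB := Bop_C1_on).
  set (B := Bop f u0 du0 h dh) in *. set (C := Cop f u0 du0 h dh) in *.
  destruct (cont_on_bounded a b dh ltac:(lra) (proj2 Hh)) as [L [HL BL]].
  destruct (cont_on_bounded a b B ltac:(lra) (C1_on_cont_on _ _ _ _ HB)) as [MB [HMB BMB]].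
  destruct (cont_on_bounded a b C ltac:(lra) (proj2 HB)) as [Lc [HLc BLc]].
  exists (L * MB + 2 * Lc). split; [nra|].
  intros s dl Hs Hdl Hdly.
  assert (Hh1 : Rabs (h (y - dl)) <= L * dl).
  { rewrite <- Rabs_Ropp, <- (Rminus_0_l (h (y - dl))), <- Hhy.
    replace dl with (y - (y - dl)) at 2 by ring.
    apply (C1_on_lipschitz a b h dh); auto; try lra. intros; apply BL; lra. }
  assert (HB1 : Rabs (B (y - dl) - B y) <= Lc * dl).
  { rewrite Rabs_minus_sym. replace dl with (y - (y - dl)) at 2 by ring.
    apply (C1_on_lipschitz a b B C); auto; try lra. intros; apply BLc; lra. }
  assert (HB2 := BMB (y - dl) ltac:(lra)).
  replace ((h (y - dl) + 2 * s) * B (y - dl))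
    with (h (y - dl) * B (y - dl) + 2 * s * B y + 2 * s * (B (y - dl) - B y)) by ring.
  assert (h (y - dl) * B (y - dl) <= L * dl * MB).
  { eapply Rle_trans; [apply Rle_abs|]. rewrite Rabs_mult.
    apply Rmult_le_compat; auto; apply Rabs_pos. }
  assert (2 * s * (B (y - dl) - B y) <= 2 * (Lc * dl)).
  { eapply Rle_trans; [apply Rle_abs|]. rewrite !Rabs_mult, (Rabs_pos_eq 2) by lra.
    pose proof (Rabs_pos s). pose proof (Rabs_pos (B (y - dl) - B y)).
    assert (Rabs s * Rabs (B (y - dl) - B y) <= 1 * (Lc * dl))
      by (apply Rmult_le_compat; auto). lra. }
  lra.
Qed.

Lemma cutoff_middle_integral_le y : a < y <= b -> h y = 0 ->
  exists K, 0 < K /\ forall s dl, Rabs s <= 1 -> 0 < dl -> dl <= y - a ->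
  Rabs (RInt (fun x => second_var_integrand f u0 du0 x (cutoff_test h y dl s x)
                         (dcutoff_test h dh y dl x)) (y - dl) y) <= K * dl.
Proof.
  intros Hy Hhy.
  destruct (cont_on_coefficients a b f u0 du0 Hf Hu0) as [_ [Cpp [Cpu [_ Cuu]]]].
  assert (Ch : cont_on a b h) by (eapply C1_on_cont_on; eauto).
  destruct (cont_on_bounded a b dh ltac:(lra) (proj2 Hh)) as [L [HL BL]].
  destruct (cont_on_bounded a b h ltac:(lra) Ch) as [Mh [HMh BMh]].
  destruct (cont_on_bounded a b _ ltac:(lra) Cpp) as [P2 [HP2 BP2]].
  destruct (cont_on_bounded a b _ ltac:(lra) Cpu) as [Ppu [HPpu BPpu]].
  destruct (cont_on_bounded a b _ ltac:(lra) Cuu) as [Puu [HPuu BPuu]].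
  exists (Puu * (Mh + 1) ^ 2 + 2 * Ppu * (Mh + 1) * (3 * L) + P2 * (3 * L) ^ 2). split.
  { assert (0 < Puu * (Mh + 1) ^ 2) by (apply Rmult_lt_0_compat; nra).
    assert (0 <= P2 * (3 * L) ^ 2) by nra.
    assert (0 <= 2 * Ppu * (Mh + 1) * (3 * L)) by (repeat apply Rmult_le_pos; lra). lra. }
  intros s dl Hs Hdl Hdly.
  assert (Hu := C1_on_cutoff_test y dl s Hdl).
  replace dl with (y - (y - dl)) at 2 by ring.
  apply RInt_abs_bound_on; [lra | |].
  { apply (cont_on_subset a b); try lra.
    apply (cont_on_second_var_integrand a b f u0 du0 Hab Hf Hu0);
      [apply (C1_on_cont_on _ _ _ _ Hu) | apply Hu]. }
  intros x Hx.
  destruct (cutoff_bounds y dl x Hdl) as [Hc1 Hc2].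
  assert (Hhx : Rabs (h x) <= L * dl).
  { rewrite <- Rabs_Ropp, <- (Rminus_0_l (h x)), <- Hhy.
    apply Rle_trans with (L * (y - x));
      [apply (C1_on_lipschitz a b h dh); auto; try lra; intros; apply BL; lra |].
    apply Rmult_le_compat_l; lra. }
  unfold second_var_integrand, cutoff_test, dcutoff_test. apply quad_form_abs_le;
    [apply BP2 | apply BPpu | apply BPuu | |]; try lra.
  - eapply Rle_trans; [apply Rabs_triang|]. rewrite Rabs_mult.
    assert (Rabs (h x) * Rabs (cutoff y dl x) <= Mh * 1)
      by (apply Rmult_le_compat; auto; try apply Rabs_pos; apply BMh; lra).
    lra.
  - eapply Rle_trans; [apply Rabs_triang|]. rewrite !Rabs_mult.
    assert (Rabs (dh x) * Rabs (cutoff y dl x) <= L * 1)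
      by (apply Rmult_le_compat; auto; try apply Rabs_pos; apply BL; lra).
    assert (Rabs (h x) * Rabs (dcutoff y dl x) <= L * dl * (2 / dl))
      by (apply Rmult_le_compat; auto; apply Rabs_pos).
    replace (L * dl * (2 / dl)) with (2 * L) in H0 by (field; lra). lra.
Qed.

Lemma cutoff_left_integral y dl s : 0 < dl -> a <= y - dl -> y - dl <= b ->
  RInt (fun x => second_var_integrand f u0 du0 x (cutoff_test h y dl s x)
                   (dcutoff_test h dh y dl x)) a (y - dl)
  = (h (y - dl) + 2 * s) * Bop f u0 du0 h dh (y - dl) - (h a + 2 * s) * Bop f u0 du0 h dh a
    + s ^ 2 * RInt (along (fuu f) u0 du0) a (y - dl) :> R.
Proof.
  intros Hdl H1 H2. rewrite <- second_variation_shift by lra.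
  apply RInt_ext_on; auto. intros x Hx. unfold cutoff_test, dcutoff_test.
  destruct (cutoff_left y dl x Hdl ltac:(lra)) as [-> ->]. f_equal; ring.
Qed.

Lemma cutoff_right_integral y dl s : 0 < dl -> a <= y <= b ->
  RInt (fun x => second_var_integrand f u0 du0 x (cutoff_test h y dl s x)
                   (dcutoff_test h dh y dl x)) y b
  = s ^ 2 * RInt (along (fuu f) u0 du0) y b :> R.
Proof.
  intros Hdl Hy.
  destruct (cont_on_coefficients a b f u0 du0 Hf Hu0) as [_ [_ [_ [_ Cuu]]]].
  rewrite <- RInt_scal_on; [| lra | eapply cont_on_subset; eauto; lra].
  apply RInt_ext_on; [lra|]. intros x Hx.
  unfold second_var_integrand, cutoff_test, dcutoff_test.
  destruct (cutoff_right y dl x Hdl ltac:(lra)) as [-> ->]. ring.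
Qed.

(* On [a, y - dl] the test field is the shifted Jacobi field [h + s], on
   [y, b] the constant [s], and the transition layer contributes [O(dl)]. *)
Lemma cutoff_second_variation_le y : Bop f u0 du0 h dh a = 0 -> a < y <= b -> h y = 0 ->
  exists K, 0 < K /\ forall s dl, Rabs s <= 1 -> 0 < dl -> dl <= y - a ->
  second_variation a b f u0 du0 (cutoff_test h y dl s) (dcutoff_test h dh y dl)
  <= 2 * s * Bop f u0 du0 h dh y + s ^ 2 * RInt (along (fuu f) u0 du0) a b + K * dl.
Proof.
  intros HBa Hy Hhy.
  destruct (jacobi_endpoint_shift_le y Hy Hhy) as [K1 [HK1 Hend]].
  destruct (cutoff_middle_integral_le y Hy Hhy) as [K2 [HK2 Hmid]].
  destruct (cont_on_coefficients a b f u0 du0 Hf Hu0) as [_ [_ [_ [_ Cuu]]]].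
  destruct (cont_on_bounded a b _ ltac:(lra) Cuu) as [Puu [HPuu BPuu]].
  exists (K1 + K2 + Puu). split; [lra|].
  intros s dl Hs Hdl Hdly.
  assert (Hu := C1_on_cutoff_test y dl s Hdl).
  set (qi := fun x => second_var_integrand f u0 du0 x (cutoff_test h y dl s x)
                        (dcutoff_test h dh y dl x)).
  assert (Cqi : cont_on a b qi)
    by (apply (cont_on_second_var_integrand a b f u0 du0 Hab Hf Hu0);
        [apply (C1_on_cont_on _ _ _ _ Hu) | apply Hu]).
  assert (Hgap := RInt_Chasles_gap_abs_le a (y - dl) y b _ Puu ltac:(lra) ltac:(lra)
                    ltac:(lra) Cuu ltac:(intros; apply BPuu; lra)).
  specialize (Hend s dl Hs Hdl Hdly). specialize (Hmid s dl Hs Hdl Hdly). fold qi in Hmid.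
  unfold second_variation. fold qi.
  rewrite <- (RInt_Chasles_on a (y - dl) b qi), <- (RInt_Chasles_on (y - dl) y b qi);
    try lra; auto; [| eapply cont_on_subset; eauto; lra].
  unfold qi. rewrite cutoff_left_integral, cutoff_right_integral, HBa by lra. fold qi.
  set (uu := along (fuu f) u0 du0) in *.
  replace (y - (y - dl)) with dl in Hgap by ring.
  apply Rabs_le_between in Hmid. apply Rabs_le_between in Hgap.
  assert (Hs2 : 0 <= s ^ 2 <= 1).
  { split; [apply pow2_ge_0|]. rewrite <- (pow2_abs s). pose proof (Rabs_pos s). nra. }
  assert (s ^ 2 * (RInt uu a (y - dl) + RInt uu y b) <= s ^ 2 * RInt uu a b + Puu * dl).
  { assert (0 <= s ^ 2 * (Puu * dl - (RInt uu a (y - dl) + RInt uu y b - RInt uu a b)))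
      by (apply Rmult_le_pos; lra).
    assert (0 <= (1 - s ^ 2) * (Puu * dl)) by (apply Rmult_le_pos; nra).
    nra. }
  nra.
Qed.

(* With [beta = B h (y) <> 0] (uniqueness for the Jacobi equation) and
   [s = - tau beta] for small [tau], the bound above is [< 0] for small [dl]. *)
Lemma conjugate_point_not_weak_minimizer y : (exists x, a <= x <= b /\ h x <> 0) ->
  Bop f u0 du0 h dh a = 0 -> a < y <= b -> h y = 0 -> ~ weak_minimizer a b f u0 du0.
Proof.
  intros Hnt HBa Hy Hhy Hwm.
  set (beta := Bop f u0 du0 h dh y).
  assert (Hbeta : beta <> 0).
  { intros H0. destruct Hnt as [x1 [Hx1 Hhx1]]. apply Hhx1.
    apply (jacobi_unique y); auto; lra. }
  destruct (cutoff_second_variation_le y HBa Hy Hhy) as [K [HK Hcut]].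
  set (U := RInt (along (fuu f) u0 du0) a b) in *.
  set (tau := / ((Rabs beta + 1) * (Rabs U + 1))).
  pose proof (Rabs_pos beta). pose proof (Rabs_pos U).
  assert (Htau : 0 < tau) by (unfold tau; apply Rinv_0_lt_compat, Rmult_lt_0_compat; lra).
  assert (Htb : tau * Rabs beta <= 1 /\ tau * Rabs U <= 1).
  { unfold tau. split; apply Rmult_le_reg_l with ((Rabs beta + 1) * (Rabs U + 1));
      try (apply Rmult_lt_0_compat; lra);
      rewrite <- Rmult_assoc, Rinv_r, Rmult_1_l, Rmult_1_r;
      try (apply Rgt_not_eq, Rmult_lt_0_compat; lra); nra. }
  set (s := - tau * beta).
  assert (Hs : Rabs s <= 1) by (unfold s; rewrite Rabs_mult, Rabs_Ropp, Rabs_pos_eq; lra).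
  assert (Hb2 : 0 < beta ^ 2) by (apply pow2_gt_0; auto).
  assert (Hsb : 2 * s * beta + s ^ 2 * U <= - tau * beta ^ 2).
  { unfold s. assert (tau * U <= 1) by (pose proof (Rle_abs U); nra).
    replace (2 * (- tau * beta) * beta + (- tau * beta) ^ 2 * U)
      with (- 2 * (tau * beta ^ 2) + tau * beta ^ 2 * (tau * U)) by ring.
    assert (0 < tau * beta ^ 2) by (apply Rmult_lt_0_compat; lra). nra. }
  set (dl := Rmin (y - a) (tau * beta ^ 2 / (2 * K))).
  assert (Hdl : 0 < dl).
  { unfold dl. apply Rmin_pos; [lra|]. apply Rdiv_lt_0_compat; [apply Rmult_lt_0_compat|]; lra. }
  assert (HdlK : K * dl <= tau * beta ^ 2 / 2).
  { apply Rle_trans with (K * (tau * beta ^ 2 / (2 * K)));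
      [apply Rmult_le_compat_l; [lra | apply Rmin_r] | right; field; lra]. }
  specialize (Hcut s dl Hs Hdl (Rmin_l _ _)).
  assert (Hnn := weak_minimizer_second_variation_ge0 a b f u0 du0 Hab Hf Hu0 Hextremal Hfp_a
                   Hfp_b Hwm _ _ (C1_on_cutoff_test y dl s Hdl)).
  assert (0 < tau * beta ^ 2) by (apply Rmult_lt_0_compat; lra).
  fold beta in Hcut. lra.
Qed.

End JacobiField.

Theorem theorem3p3
  (a b : R) (f : R -> R -> R -> R) (u0 du0 h dh ddh : R -> R) (c0 : R) :
  a < b ->
  Ck3 3 f ->
  C1_on a b u0 du0 ->
  (* u0 is an extremal: d/dx f^0_p = f^0_u on [a,b] *)
  (forall x, a <= x <= b ->
     deriv_within a b (along (fp f) u0 du0) x (along (fu f) u0 du0 x)) ->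
  along (fp f) u0 du0 a = 0 ->
  along (fp f) u0 du0 b = 0 ->
  0 < c0 ->
  (forall x, a <= x <= b -> c0 <= along (fpp f) u0 du0 x) ->
  (* h is a nontrivial C^2 solution of the Jacobi equation with Bh(a)=0 *)
  C2_on a b h dh ddh ->
  jacobi_sol a b f u0 du0 h dh ->
  (exists x, a <= x <= b /\ h x <> 0) ->
  Bop f u0 du0 h dh a = 0 ->
  (* (i) *)
  (((exists y, a < y <= b /\ h y = 0) \/ Bop f u0 du0 h dh b * h b < 0) ->
     ~ weak_minimizer a b f u0 du0) /\
  (* (ii) *)
  (((forall y, a < y <= b -> h y <> 0) /\ Bop f u0 du0 h dh b * h b > 0) ->
     strict_weak_minimizer a b f u0 du0).
Proof.
  intros Hab Hf Hu0 Hext Ha Hb Hc0 Hpp [Hh _] Hjac Hnt HBa.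
  assert (HB : forall x, a <= x <= b ->
            deriv_within a b (Bop f u0 du0 h dh) x (Cop f u0 du0 h dh x)).
  { intros x Hx. destruct (Hjac x Hx) as [l [Hl El]].
    replace (Cop f u0 du0 h dh x) with l by lra. auto. }
  split.
  - intros [[y [Hy Hhy]] | Hneg].
    + exact (conjugate_point_not_weak_minimizer a b f u0 du0 h dh c0 Hab Hf Hu0 Hh HB Hc0 Hpp
               Hext Ha Hb y Hnt HBa Hy Hhy).
    + intros Hwm.
      assert (Hnn := weak_minimizer_second_variation_ge0 a b f u0 du0 Hab Hf Hu0 Hext Ha Hb Hwm
                       h dh Hh).
      rewrite (jacobi_second_variation a b f u0 du0 h dh Hab Hf Hu0 Hh HB), HBa in Hnn.
      lra.
  - intros [Hnz Hpos].
    assert (Hha : h a <> 0).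
    { intros H0. destruct Hnt as [x1 [Hx1 Hhx1]]. apply Hhx1.
      apply (jacobi_unique a b f u0 du0 h dh c0 Hab Hf Hu0 Hh HB Hc0 Hpp a); auto; lra. }
    apply (jacobi_strict_weak_minimizer a b f u0 du0 h dh c0 Hab Hf Hu0 Hh HB Hc0 Hpp
             Hext Ha Hb); auto.
    intros x Hx. destruct (Req_dec x a) as [->|Hne]; auto. apply Hnz; lra.
Qed.
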